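(* Let $F$ satisfy (G1)–(G3) and let $\mu$ be an ergodic stationary probability measure of $\Pi(F)$. Then $\mathcal I_\mu$ has arbitrarily small trapping neighborhoods: for every $\varepsilon>0$ there is a trapping domain $D=\bigsqcup_k\{k\}\times D_k$ with $I_{\mu,k}\subset D_k\subset U_\varepsilon(I_{\mu,k})$ for all $k$.
   Context: Setting: $N\ge1$; $\{0,1\}$-matrix $A=(a_{ij})$ with some power having all entries positive; stochastic matrix $\Pi=(\pi_{ij})$ with $\pi_{ij}>0$ iff $a_{ij}=1$. $I=[0,1]$; $f_1,\dots,f_N:I\to I$ strictly increasing $C^1$ diffeomorphisms onto their images with $f_k(I)\subset(0,1)$. $\mathcal I=\{1,\dots,N\}\times I$, $I_k=\{k\}\times I$. $(k,m)$ admissible iff $\pi_{km}>0$. $\Pi(F)$: Markov process on $\mathcal I$ jumping from $(i,x)$ to $(j,f_i(x))$ with probability $\pi_{ij}$. $\mu$ stationary iff $\mu_j=\sum_i\pi_{ij}(f_i)_*\mu_i$ for all $j$ ($\mu_k=\mu|_{I_k}$); ergodic = extreme point of the stationary probabilities. $A_{\mu,k}=\min\operatorname{supp}\mu_k$, $B_{\mu,k}=\max\operatorname{supp}\mu_k$, $I_{\mu,k}=[A_{\mu,k},B_{\mu,k}]$, $\mathcal I_\mu=\bigsqcup_k\{k\}\times I_{\mu,k}$. Domain: $D=\bigsqcup_k\{k\}\times D_k$, $D_k$ nonempty intervals; trapping if $f_k(D_k)\subset\mathrm{int}\,D_m$ (interior in $I$) for all admissible $(k,m)$. Admissible composition $f_{w_1\dots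 w_n}=f_{w_n}\circ\dots\circ f_{w_1}:I_{w_1}\to I_{w_{n+1}}$ with each $(w_i,w_{i+1})$, $i\le n$, admissible; simple transition: $w_1,\dots,w_{n+1}$ distinct; simple return: $w_1,\dots,w_n$ distinct and $w_{n+1}=w_1$. (G1) every fixed point $q$ of a simple return $g$ has $g'(q)\ne1$; (G2) no simple transition maps an attracting (resp. repelling) fixed point of a simple return to a repelling (resp. attracting) fixed point of a simple return; (G3) no $a_1,\dots,a_N\in I$ with $f_i(a_i)=a_j$ for all admissible $(i,j)$. *)

From Stdlib Require Import Reals Lra List.
Import ListNotations.
Open Scope R_scope.

(* ---------- finite sums and matrices (indices 0..N-1 stand for 1..N) ---------- *)
Fixpoint Rsum (n : nat) (g : nat -> R) : R :=
  match n with O => 0 | S m => Rsum m g + g m end.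

Fixpoint nsum (n : nat) (g : nat -> nat) : nat :=
  match n with O => 0%nat | S m => (nsum m g + g m)%nat end.

Fixpoint mpow (N : nat) (A : nat -> nat -> nat) (n : nat) : nat -> nat -> nat :=
  match n with
  | O => fun i j => if Nat.eqb i j then 1%nat else 0%nat
  | S m => fun i j => nsum N (fun l => (mpow N A m i l * A l j)%nat)
  end.

Definition zero_one_matrix (N : nat) (A : nat -> nat -> nat) : Prop :=
  forall i j, (i < N)%nat -> (j < N)%nat -> A i j = 0%nat \/ A i j = 1%nat.

Definition has_positive_power (N : nat) (A : nat -> nat -> nat) : Prop :=
  exists n, (0 < n)%nat /\
    forall i j, (i < N)%nat -> (j < N)%nat -> (0 < mpow N A n i j)%nat.

Definition stochastic (N : nat) (P : nat -> nat -> R) : Prop :=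
  (forall i j, (i < N)%nat -> (j < N)%nat -> 0 <= P i j) /\
  (forall i, (i < N)%nat -> Rsum N (fun j => P i j) = 1).

Definition compatible (N : nat) (A : nat -> nat -> nat) (P : nat -> nat -> R) : Prop :=
  forall i j, (i < N)%nat -> (j < N)%nat -> (0 < P i j <-> A i j = 1%nat).

Definition inI (x : R) : Prop := 0 <= x <= 1.

Definition good_map (f : R -> R) : Prop :=
  (forall x, inI x -> 0 < f x < 1) /\
  (forall x y, inI x -> inI y -> x < y -> f x < f y) /\
  exists df : R -> R,
    (forall x, inI x -> derivable_pt_lim f x (df x)) /\
    (forall x, inI x -> forall eps, 0 < eps -> exists delta, 0 < delta /\
        forall y, inI y -> Rabs (y - x) < delta -> Rabs (df y - df x) < eps) /\
    (forall x, inI x -> df x <> 0).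

Definition admissible (P : nat -> nat -> R) (k m : nat) : Prop := 0 < P k m.

Fixpoint adm_chain (N : nat) (P : nat -> nat -> R) (w : list nat) : Prop :=
  match w with
  | [] => True
  | k :: rest =>
      (k < N)%nat /\
      match rest with
      | [] => True
      | m :: _ => admissible P k m /\ adm_chain N P rest
      end
  end.

(* w = [w_1; ...; w_(n+1)] with n >= 1 *)
Definition admissible_word (N : nat) (P : nat -> nat -> R) (w : list nat) : Prop :=
  (2 <= length w)%nat /\ adm_chain N P w.

(* f_{w_1 ... w_n} = f_{w_n} o ... o f_{w_1} (the last letter w_(n+1) is only the target) *)
Fixpoint comp (f : nat -> R -> R) (w : list nat) : R -> R :=
  match w with
  | [] => fun x => x
  | k :: rest =>
      match rest with
      | [] => fun x => x
      | _ => fun x => comp f rest (f k x)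
      end
  end.

Definition simple_transition (N : nat) (P : nat -> nat -> R) (w : list nat) : Prop :=
  admissible_word N P w /\ NoDup w.

Definition simple_return (N : nat) (P : nat -> nat -> R) (w : list nat) : Prop :=
  admissible_word N P w /\
  exists k w', w = (k :: w') ++ [k] /\ NoDup (k :: w').

Definition fixed_pt (g : R -> R) (q : R) : Prop := inI q /\ g q = q.

Definition attracting_fixed_pt (g : R -> R) (q : R) : Prop :=
  fixed_pt g q /\ exists l, derivable_pt_lim g q l /\ Rabs l < 1.

Definition repelling_fixed_pt (g : R -> R) (q : R) : Prop :=
  fixed_pt g q /\ exists l, derivable_pt_lim g q l /\ 1 < Rabs l.

Definition G1 (N : nat) (P : nat -> nat -> R) (f : nat -> R -> R) : Prop :=
  forall w q l, simple_return N P w -> fixed_pt (comp f w) q ->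
    derivable_pt_lim (comp f w) q l -> l <> 1.

Definition G2 (N : nat) (P : nat -> nat -> R) (f : nat -> R -> R) : Prop :=
  forall w u v q, simple_transition N P w -> simple_return N P u -> simple_return N P v ->
    hd O u = hd O w -> hd O v = last w O ->
    (attracting_fixed_pt (comp f u) q -> ~ repelling_fixed_pt (comp f v) (comp f w q)) /\
    (repelling_fixed_pt (comp f u) q -> ~ attracting_fixed_pt (comp f v) (comp f w q)).

Definition G3 (N : nat) (P : nat -> nat -> R) (f : nat -> R -> R) : Prop :=
  ~ exists a : nat -> R,
      (forall i, (i < N)%nat -> inI (a i)) /\
      (forall i j, (i < N)%nat -> (j < N)%nat -> admissible P i j -> f i (a i) = a j).

Definition sigma_algebra (S : (R -> Prop) -> Prop) : Prop :=
  S (fun _ => True) /\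
  (forall A, S A -> S (fun x => ~ A x)) /\
  (forall An : nat -> R -> Prop, (forall n, S (An n)) -> S (fun x => exists n, An n x)).

Definition borel (A : R -> Prop) : Prop :=
  forall S, sigma_algebra S ->
    (forall a b, S (fun x => a < x < b)) -> S A.

Definition finite_measure (mu : (R -> Prop) -> R) : Prop :=
  mu (fun _ => False) = 0 /\
  (forall A, borel A -> 0 <= mu A) /\
  (forall An : nat -> R -> Prop,
     (forall n, borel (An n)) ->
     (forall n m x, n <> m -> An n x -> An m x -> False) ->
     infinite_sum (fun n => mu (An n)) (mu (fun x => exists n, An n x))).

(* A measure on the disjoint union {1..N} x I is given by its restrictions
   mu_k (k < N), each a finite Borel measure on R concentrated on I. *)
Definition meas_on_union (N : nat) (mu : nat -> (R -> Prop) -> R) : Prop :=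
  forall k, (k < N)%nat -> finite_measure (mu k) /\ mu k (fun x => ~ inI x) = 0.

Definition prob_on_union (N : nat) (mu : nat -> (R -> Prop) -> R) : Prop :=
  meas_on_union N mu /\ Rsum N (fun k => mu k (fun _ => True)) = 1.

Definition stationary (N : nat) (P : nat -> nat -> R) (f : nat -> R -> R)
    (mu : nat -> (R -> Prop) -> R) : Prop :=
  prob_on_union N mu /\
  forall j A, (j < N)%nat -> borel A ->
    mu j A = Rsum N (fun i => P i j * mu i (fun x => inI x /\ A (f i x))).

Definition same_measure (N : nat) (mu nu : nat -> (R -> Prop) -> R) : Prop :=
  forall k A, (k < N)%nat -> borel A -> mu k A = nu k A.

(* ergodic = extreme point of the convex set of stationary probabilities *)
Definition ergodic (N : nat) (P : nat -> nat -> R) (f : nat -> R -> R)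
    (mu : nat -> (R -> Prop) -> R) : Prop :=
  stationary N P f mu /\
  forall nu1 nu2 t, 0 < t < 1 -> stationary N P f nu1 -> stationary N P f nu2 ->
    (forall k A, (k < N)%nat -> borel A -> mu k A = t * nu1 k A + (1 - t) * nu2 k A) ->
    same_measure N nu1 mu /\ same_measure N nu2 mu.

Definition supp (m : (R -> Prop) -> R) (x : R) : Prop :=
  forall delta, 0 < delta -> 0 < m (fun y => x - delta < y < x + delta).

(* I_{mu,k} = [min supp mu_k, max supp mu_k], written as the convex hull of the support *)
Definition I_mu (m : (R -> Prop) -> R) (x : R) : Prop :=
  exists a b, supp m a /\ supp m b /\ a <= x <= b.

Definition U_eps (eps : R) (S : R -> Prop) (y : R) : Prop :=
  exists x, S x /\ Rabs (y - x) < eps.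

Definition interval (D : R -> Prop) : Prop :=
  forall x y z, D x -> D y -> x <= z <= y -> D z.

Definition interior_I (D : R -> Prop) (x : R) : Prop :=
  D x /\ exists delta, 0 < delta /\ forall y, inI y -> Rabs (y - x) < delta -> D y.

Definition domain (N : nat) (D : nat -> R -> Prop) : Prop :=
  forall k, (k < N)%nat ->
    (exists x, D k x) /\ interval (D k) /\ (forall x, D k x -> inI x).

Definition trapping (N : nat) (P : nat -> nat -> R) (f : nat -> R -> R)
    (D : nat -> R -> Prop) : Prop :=
  domain N D /\
  forall k m x, (k < N)%nat -> (m < N)%nat -> admissible P k m -> D k x ->
    interior_I (D m) (f k x).

From Pilot Require Import Defs.
From Stdlib Require Import Reals List.
From Stdlib Require Import Lra Lia ZArith Permutation FunctionalExtensionality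
  PropExtensionality Classical ClassicalEpsilon.
Import ListNotations.
Open Scope R_scope.

(* Let [a k] be the least point of the support of [mu k]. Support points are carried
   to support points along admissible transitions, so [a k <= f i (a i)] whenever
   [i -> k] is admissible; call the transition tight when equality holds. Along a
   simple cycle of tight transitions the composed map fixes [a] with multiplier the
   product [weight d] of the derivatives [d k = f_k'(a k)]; by (G1) it is not 1.
   A repelling tight cycle is impossible: a mass-balance argument near the lower
   ends (using (G2) to rule out attracting cycles upstream of it and an expanding
   potential on the graph) shows that all transitions would be tight, contradicting
   (G3). So all tight cycles contract, which yields a contracting potential [phi]
   on the tight graph, and the margins [delta k = s * phi k] (for small [s]) make
   [x >= a k - delta k] map strictly above [a m - delta m]. Applying the same result
   to the system conjugated by [x |-> 1 - x] handles the upper ends, and the boxes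
   [[a k - delta k, b k + delta' k]] form the required trapping domain. *)

Lemma Rsum_ext n g h : (forall i, (i < n)%nat -> g i = h i) -> Rsum n g = Rsum n h.
Proof.
  induction n as [|n IH]; simpl; intros E; auto.
  rewrite IH by (intros; apply E; lia). now rewrite E by lia.
Qed.

Lemma Rsum_zero n : Rsum n (fun _ => 0) = 0.
Proof. induction n as [|n IH]; simpl; [|rewrite IH]; lra. Qed.

Lemma Rsum_le n g h : (forall i, (i < n)%nat -> g i <= h i) -> Rsum n g <= Rsum n h.
Proof.
  induction n as [|n IH]; simpl; intros Hle; [lra|].
  assert (Rsum n g <= Rsum n h) by (apply IH; intros; apply Hle; lia).
  specialize (Hle n ltac:(lia)); lra.
Qed.

Lemma Rsum_nonneg n g : (forall i, (i < n)%nat -> 0 <= g i) -> 0 <= Rsum n g.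
Proof. intros H; rewrite <- (Rsum_zero n); apply Rsum_le; auto. Qed.

Lemma Rsum_plus n g h : Rsum n (fun i => g i + h i) = Rsum n g + Rsum n h.
Proof. induction n as [|n IH]; simpl; [|rewrite IH]; lra. Qed.

Lemma Rsum_scal n c g : Rsum n (fun i => c * g i) = c * Rsum n g.
Proof. induction n as [|n IH]; simpl; [|rewrite IH]; lra. Qed.

Lemma Rsum_swap n m (g : nat -> nat -> R) :
  Rsum n (fun i => Rsum m (fun j => g i j)) = Rsum m (fun j => Rsum n (fun i => g i j)).
Proof.
  induction n as [|n IH]; simpl; [now rewrite Rsum_zero|].
  now rewrite IH, <- Rsum_plus.
Qed.

Lemma Rsum_gap n g h k e : (forall i, (i < n)%nat -> g i <= h i) -> (k < n)%nat ->
  g k + e <= h k -> Rsum n g + e <= Rsum n h.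
Proof.
  induction n as [|n IH]; simpl; intros Hle Hk Hgap; [lia|].
  assert (Rsum n g <= Rsum n h) by (apply Rsum_le; intros; apply Hle; lia).
  destruct (Nat.eq_dec k n) as [->|Hkn]; [lra|].
  assert (Rsum n g + e <= Rsum n h) by (apply IH; auto; try lia; intros; apply Hle; lia).
  specialize (Hle n ltac:(lia)); lra.
Qed.

Lemma Rsum_term_le n g k :
  (forall i, (i < n)%nat -> 0 <= g i) -> (k < n)%nat -> g k <= Rsum n g.
Proof.
  intros Hnn Hk. rewrite <- (Rplus_0_l (g k)), <- (Rsum_zero n).
  apply Rsum_gap with k; auto; lra.
Qed.

Lemma Rsum_pos_ex n g : 0 < Rsum n g -> exists i, (i < n)%nat /\ 0 < g i.
Proof.
  intros Hpos. apply NNPP; intros Hnone.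
  assert (Rsum n g <= Rsum n (fun _ => 0)); [|rewrite Rsum_zero in *; lra].
  apply Rsum_le; intros i Hi; apply Rnot_lt_le; intros Hg; eauto.
Qed.

Lemma eventually_small_all (N : nat) (Q : nat -> R -> Prop) :
  (forall k, (k < N)%nat -> exists t, 0 < t /\ forall s, 0 < s -> s < t -> Q k s) ->
  exists t, 0 < t /\ forall s, 0 < s -> s < t -> forall k, (k < N)%nat -> Q k s.
Proof.
  induction N as [|N IH]; intros H.
  { exists 1; split; [lra|intros; lia]. }
  destruct IH as [t1 [Ht1 H1]]; [intros; apply H; lia|].
  destruct (H N ltac:(lia)) as [t2 [Ht2 H2]].
  exists (Rmin t1 t2); split; [now apply Rmin_pos|].
  intros s Hs Hst k Hk.
  pose proof (Rmin_l t1 t2); pose proof (Rmin_r t1 t2).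
  destruct (Nat.eq_dec k N) as [->|]; [apply H2; lra|apply H1; [lra|lra|lia]].
Qed.

Lemma finite_pos_lower_bound (N : nat) (g : nat -> R) : (forall k, (k < N)%nat -> 0 < g k) ->
  exists c, 0 < c /\ forall k, (k < N)%nat -> c <= g k.
Proof.
  intros H. destruct (eventually_small_all N (fun k s => s <= g k)) as [t [Ht Hall]].
  { intros k Hk; exists (g k); split; auto; intros; lra. }
  exists (t / 2); split; [lra|]; intros k Hk; apply Hall; auto; lra.
Qed.

Lemma finite_choice {T : Type} (inh : T) (N : nat) (Q : nat -> T -> Prop) :
  (forall k, (k < N)%nat -> exists y, Q k y) ->
  exists g : nat -> T, forall k, (k < N)%nat -> Q k (g k).
Proof.
  intros H. exists (fun k => epsilon (inhabits inh) (Q k)).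
  intros k Hk; apply epsilon_spec; auto.
Qed.

Lemma set_ext (A B : R -> Prop) : (forall x, A x <-> B x) -> A = B.
Proof. intros H; apply functional_extensionality; intros x; apply propositional_extensionality; auto. Qed.

Lemma nat_above (r : R) : exists n : nat, r < INR n.
Proof.
  destruct (archimed (Rmax r 0)) as [Hup _].
  pose proof (Rmax_l r 0); pose proof (Rmax_r r 0).
  exists (Z.to_nat (up (Rmax r 0))).
  rewrite INR_IZR_INZ, Z2Nat.id by (apply le_IZR; lra); lra.
Qed.

Lemma borel_eq A B : borel A -> (forall x, A x <-> B x) -> borel B.
Proof. intros H E; replace B with A; auto; now apply set_ext. Qed.

Lemma borel_compl A : borel A -> borel (fun x => ~ A x).
Proof. intros H S HS Hi; apply HS, H; auto. Qed.

Lemma borel_cunion (An : nat -> R -> Prop) :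
  (forall n, borel (An n)) -> borel (fun x => exists n, An n x).
Proof. intros H S HS Hi; apply HS; intros n; apply H; auto. Qed.

Lemma borel_union A B : borel A -> borel B -> borel (fun x => A x \/ B x).
Proof.
  intros HA HB. eapply borel_eq.
  { apply borel_cunion with (An := fun n => match n with O => A | _ => B end).
    intros [|n]; auto. }
  intros x; split; [intros [[|n] Hn]; auto|intros [H|H]; [exists O|exists 1%nat]; auto].
Qed.

Lemma borel_inter A B : borel A -> borel B -> borel (fun x => A x /\ B x).
Proof.
  intros HA HB.
  apply borel_eq with (fun x => ~ (~ A x \/ ~ B x)).
  { apply borel_compl, borel_union; apply borel_compl; auto. }
  intros x; split; [intros h; split; apply NNPP; intros hc; apply h; auto|].
  intros [ha hb] [hn|hn]; auto.
Qed.

Lemma borel_True : borel (fun _ => True).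
Proof. intros S HS _; apply HS. Qed.

Lemma borel_False : borel (fun _ => False).
Proof. eapply borel_eq; [apply borel_compl, borel_True|]; tauto. Qed.

Lemma borel_open a b : borel (fun x => a < x < b).
Proof. intros S HS Hi; apply Hi. Qed.

Lemma borel_lt b : borel (fun x => x < b).
Proof.
  eapply borel_eq; [apply borel_cunion with (An := fun n x => b - INR n - 1 < x < b);
    intros; apply borel_open|].
  intros x; split; [intros [n Hn]; lra|].
  intros Hx; destruct (nat_above (b - x)) as [n Hn]; exists n; lra.
Qed.

Lemma borel_gt a : borel (fun x => a < x).
Proof.
  eapply borel_eq; [apply borel_cunion with (An := fun n x => a < x < a + INR n + 1);
    intros; apply borel_open|].
  intros x; split; [intros [n Hn]; lra|].
  intros Hx; destruct (nat_above (x - a)) as [n Hn]; exists n; lra.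
Qed.

Lemma borel_singleton a : borel (fun x => x = a).
Proof.
  eapply borel_eq; [apply borel_compl, borel_union; [apply (borel_lt a)|apply (borel_gt a)]|].
  intros x; lra.
Qed.

Lemma borel_inI : borel inI.
Proof.
  eapply borel_eq; [apply borel_compl, borel_union; [apply (borel_lt 0)|apply (borel_gt 1)]|].
  unfold inI; intros x; lra.
Qed.

(* A bounded interval (in the order-convex sense of [interval]) is Borel: it is an open
   interval between its infimum and supremum, plus possibly these endpoints. *)
Lemma borel_interval J lo hi : interval J -> (forall x, J x -> lo <= x <= hi) -> borel J.
Proof.
  intros Hconv Hbnd. destruct (classic (exists x, J x)) as [[x0 Hx0]|Hempty].
  2:{ eapply borel_eq; [apply borel_False|]. intros x; split; [tauto|intros h; eauto]. }
  destruct (completeness J) as [beta [Hub Hlub]]; [exists hi; intros x h; apply Hbnd; auto|eauto|].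
  destruct (completeness (fun y => J (- y))) as [malpha [Hlb Hglb]].
  { exists (- lo); intros x h; apply Hbnd in h; lra. }
  { exists (- x0); now rewrite Ropp_involutive. }
  set (alpha := - malpha).
  assert (Hlo : forall x, J x -> alpha <= x).
  { intros x h; unfold alpha; assert (- x <= malpha); [apply Hlb; now rewrite Ropp_involutive|lra]. }
  assert (Hhi : forall x, J x -> x <= beta) by (intros; apply Hub; auto).
  assert (Hend : forall c, borel (fun x => x = c /\ J c)).
  { intros c; destruct (classic (J c)) as [Hc|Hc].
    - eapply borel_eq; [apply (borel_singleton c)|]; intros x; tauto.
    - eapply borel_eq; [apply borel_False|]; intros x; tauto. }
  eapply borel_eq.
  { apply borel_union; [apply (borel_open alpha beta)|apply borel_union; apply Hend]. }
  intros x; split.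
  - intros [[h1 h2]|[[-> h]|[-> h]]]; auto.
    assert (exists y, J y /\ y < x) as [y [Hy Hyx]].
    { apply NNPP; intros hn. assert (malpha <= - x); [|unfold alpha in h1; lra].
      apply Hglb; intros z hz; apply Rnot_lt_le; intros hz2; apply hn; exists (- z); split; auto; lra. }
    assert (exists z, J z /\ x < z) as [z [Hz Hxz]].
    { apply NNPP; intros hn. assert (beta <= x); [|lra].
      apply Hlub; intros z hz; apply Rnot_lt_le; intros hz2; apply hn; eauto. }
    apply (Hconv y z x); auto; lra.
  - intros h. specialize (Hlo x h); specialize (Hhi x h).
    destruct (Req_dec x alpha) as [->|]; auto. destruct (Req_dec x beta) as [->|]; auto.
    left; lra.
Qed.

Section Measure.
Variable m : (R -> Prop) -> R.
Hypothesis Hm : finite_measure m.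

Lemma meas_nonneg A : borel A -> 0 <= m A.
Proof. apply Hm. Qed.

Lemma meas_add A B : borel A -> borel B -> (forall x, A x -> B x -> False) ->
  m (fun x => A x \/ B x) = m A + m B.
Proof.
  destruct Hm as [H0 [_ Hadd]]. intros HA HB Hdisj.
  set (An := fun n : nat => match n with O => A | S O => B | _ => fun _ : R => False end).
  replace (fun x => A x \/ B x) with (fun x => exists n, An n x).
  2:{ apply set_ext; intros x; split; [intros [[|[|n]] h]; [left|right|destruct h]; exact h|].
      intros [h|h]; [exists O|exists 1%nat]; auto. }
  apply (uniqueness_sum (fun n => m (An n))).
  - apply Hadd; [intros [|[|n]]; simpl; auto; apply borel_False|].
    intros [|[|n]] [|[|k]] x Hnk h1 h2; simpl in *; solve [lia|eauto].
  - intros e He; exists 1%nat; intros n Hn.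
    replace (sum_f_R0 (fun n => m (An n)) n) with (m A + m B).
    + unfold R_dist; rewrite Rminus_diag, Rabs_R0; auto.
    + induction n as [|[|n] IH]; [lia|simpl; ring|].
      rewrite tech5, <- IH by lia; simpl An; rewrite H0; ring.
Qed.

Lemma meas_mono A B : borel A -> borel B -> (forall x, A x -> B x) -> m A <= m B.
Proof.
  intros HA HB Hsub.
  assert (HD : borel (fun x => B x /\ ~ A x)) by (apply borel_inter; auto; apply borel_compl; auto).
  replace B with (fun x => A x \/ (B x /\ ~ A x)).
  - rewrite meas_add by (auto; tauto). pose proof (meas_nonneg _ HD); lra.
  - apply set_ext; intros x; split; [intros [h|[h _]]; auto|].
    intros h; destruct (classic (A x)); auto.
Qed.

Lemma meas_null_sub A Z : borel A -> borel Z -> m Z = 0 -> (forall x, A x -> Z x) -> m A = 0.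
Proof.
  intros HA HZ H0 Hsub. apply Rle_antisym; [rewrite <- H0; now apply meas_mono|].
  now apply meas_nonneg.
Qed.

Lemma meas_null_union (An : nat -> R -> Prop) : (forall n, borel (An n)) ->
  (forall n, m (An n) = 0) -> m (fun x => exists n, An n x) = 0.
Proof.
  intros HB H0. destruct Hm as [_ [_ Hadd]].
  set (Dn := fun n x => An n x /\ forall k, (k < n)%nat -> ~ An k x).
  assert (HD : forall n, borel (Dn n)).
  { intros n; apply borel_inter; auto. induction n as [|n IH].
    - eapply borel_eq; [apply borel_True|]; intros x; split; auto; intros; lia.
    - eapply borel_eq; [apply (borel_inter _ _ IH (borel_compl _ (HB n)))|].
      intros x; split; [intros [h1 h2] k Hk; destruct (Nat.eq_dec k n) as [->|]; auto; apply h1; lia|].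
      intros h; split; [intros k Hk|]; apply h; lia. }
  replace (fun x => exists n, An n x) with (fun x => exists n, Dn n x).
  2:{ apply set_ext; intros x; split; [intros [n [h _]]; eauto|intros [n h]].
      induction n as [n IH] using (well_founded_induction lt_wf).
      destruct (classic (exists k, (k < n)%nat /\ An k x)) as [[k [Hk Hak]]|hn]; [now apply (IH k)|].
      exists n; split; auto; intros k Hk Hak; eauto. }
  apply (uniqueness_sum (fun n => m (Dn n))).
  - apply Hadd; auto. intros n k x Hnk [h1 h2] [h3 h4].
    destruct (Nat.lt_total n k) as [h|[h|h]]; [apply (h4 n)|contradiction|apply (h2 k)]; auto.
  - replace (fun n => m (Dn n)) with (fun _ : nat => 0).
    + intros e He; exists O; intros n _; unfold R_dist.
      replace (sum_f_R0 (fun _ => 0) n) with 0; [rewrite Rminus_diag, Rabs_R0; auto|].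
      induction n; simpl; [|rewrite <- IHn]; lra.
    + apply functional_extensionality; intros n; symmetry.
      apply meas_null_sub with (An n); auto; intros x [h _]; auto.
Qed.

Hypothesis Hout : m (fun x => ~ inI x) = 0.

Lemma meas_restrict A : borel A -> m A = m (fun x => inI x /\ A x).
Proof.
  intros HA.
  assert (B1 : borel (fun x => inI x /\ A x)) by (apply borel_inter; auto; apply borel_inI).
  assert (B2 : borel (fun x => ~ inI x /\ A x)) by (apply borel_inter; auto; apply borel_compl, borel_inI).
  assert (Hnull : m (fun x => ~ inI x /\ A x) = 0).
  { apply meas_null_sub with (fun x => ~ inI x); auto; [apply borel_compl, borel_inI|tauto]. }
  replace A with (fun x => (inI x /\ A x) \/ (~ inI x /\ A x)) at 1.
  - rewrite meas_add; auto; [lra|tauto].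
  - apply set_ext; intros x; split; [tauto|]. intros h; destruct (classic (inI x)); auto.
Qed.

End Measure.

Lemma null_ray_supp m c a : finite_measure m -> m (fun x => x < c) = 0 -> supp m a -> c <= a.
Proof.
  intros Hm H0 Hs. apply Rnot_lt_le; intros h. specialize (Hs (c - a) ltac:(lra)).
  assert (m (fun y => a - (c - a) < y < a + (c - a)) <= m (fun x => x < c)); [|lra].
  apply meas_mono; auto; [apply borel_open|apply borel_lt|intros; lra].
Qed.

Lemma null_ray_limit m a : finite_measure m ->
  (forall t, t < a -> m (fun x => x < t) = 0) -> m (fun x => x < a) = 0.
Proof.
  intros Hm Hnull.
  assert (Hpos : forall n, 0 < / (INR n + 1)) by (intros; apply Rinv_0_lt_compat; pose proof (pos_INR n); lra).
  replace (fun x => x < a) with (fun x => exists n : nat, x < a - / (INR n + 1)).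
  { apply meas_null_union; auto; [intros; apply borel_lt|]. intros n; apply Hnull; specialize (Hpos n); lra. }
  apply set_ext; intros x; split; [intros [n h]; specialize (Hpos n); lra|intros h].
  destruct (nat_above (/ (a - x))) as [n Hn].
  assert (Hax : 0 < / (a - x)) by (apply Rinv_0_lt_compat; lra).
  exists n. assert (/ (INR n + 1) < a - x); [|lra].
  rewrite <- (Rinv_inv (a - x)). apply Rinv_lt_contravar; [apply Rmult_lt_0_compat|]; lra.
Qed.

Lemma lower_endpoint m : finite_measure m -> m (fun x => ~ inI x) = 0 -> 0 < m (fun _ => True) ->
  exists a, 0 <= a <= 1 /\ supp m a /\ (forall x, supp m x -> a <= x) /\ m (fun x => x < a) = 0.
Proof.
  intros Hm Hout Hmass.
  set (S := fun t => m (fun x => x < t) = 0).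
  assert (Hdown : forall t s, S t -> s <= t -> S s).
  { intros t s ht hs; apply meas_null_sub with (fun x => x < t); auto; try apply borel_lt; intros; lra. }
  assert (S0 : S 0).
  { apply meas_null_sub with (fun x => ~ inI x); auto; [apply borel_lt|apply borel_compl, borel_inI|].
    unfold inI; intros; lra. }
  assert (Sbound : forall t, S t -> t <= 1).
  { intros t ht; apply Rnot_lt_le; intros h.
    assert (m (fun _ => True) <= m (fun x => x < t)); [|unfold S in ht; lra].
    rewrite (meas_restrict m Hm Hout) by apply borel_True.
    apply meas_mono; auto; [apply borel_inter; [apply borel_inI|apply borel_True]|apply borel_lt|].
    unfold inI; intros x [hx _]; lra. }
  destruct (completeness S) as [a [Hub Hlub]]; [exists 1; exact Sbound|eauto|].
  assert (Ha0 : 0 <= a) by (apply Hub; auto).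
  assert (Ha1 : a <= 1) by (apply Hlub; exact Sbound).
  assert (Sa : S a).
  { apply null_ray_limit; auto. intros t ht.
    destruct (classic (exists u, S u /\ t < u)) as [[u [hu htu]]|hn]; [apply (Hdown u); auto; lra|].
    assert (a <= t); [|lra]. apply Hlub; intros u hu; apply Rnot_lt_le; intros h; apply hn; eauto. }
  assert (Hsupp : supp m a).
  { intros d hd; apply Rnot_le_lt; intros h.
    assert (Sad : S (a + d)); [|assert (a + d <= a) by (apply Hub; auto); lra].
    assert (Hslab : borel (fun x => ~ x < a /\ x < a + d))
      by (apply borel_inter; [apply borel_compl|]; apply borel_lt).
    apply Rle_antisym; [|apply meas_nonneg; auto; apply borel_lt].
    replace (fun x => x < a + d) with (fun x => x < a \/ (~ x < a /\ x < a + d)).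
    - rewrite meas_add; auto; [|apply borel_lt|tauto].
      assert (m (fun x => ~ x < a /\ x < a + d) <= m (fun y => a - d < y < a + d));
        [|unfold S in Sa; lra].
      apply meas_mono; auto; [apply borel_open|intros; lra].
    - apply set_ext; intros x; lra. }
  exists a; repeat split; auto; intros x hx; now apply (null_ray_supp m a x).
Qed.

Lemma deriv_continuous g x l : derivable_pt_lim g x l ->
  forall eps, 0 < eps -> exists delta, 0 < delta /\
    forall y, Rabs (y - x) < delta -> Rabs (g y - g x) < eps.
Proof.
  intros Hd eps He.
  destruct (derivable_continuous_pt g x (exist _ l Hd) eps He) as [delta [Hdelta Hc]].
  exists delta; split; auto; intros y Hy.
  destruct (Req_dec y x) as [->|Hne]; [rewrite Rminus_diag, Rabs_R0; auto|].
  apply (Hc y); split; [split; [exact I|auto]|exact Hy].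
Qed.

Lemma good_map_mono g : good_map g -> forall x y, inI x -> inI y -> x <= y -> g x <= g y.
Proof.
  intros [_ [Hinc _]] x y hx hy hxy.
  destruct (Req_dec x y) as [->|]; [lra|left; apply Hinc; auto; lra].
Qed.

Lemma good_map_preimage_borel g J : good_map g -> interval J -> borel (fun x => inI x /\ J (g x)).
Proof.
  intros Hg HJ. apply borel_interval with 0 1; [|unfold inI; intros x [h _]; lra].
  intros x y z [hx hgx] [hy hgy] hz. assert (hzI : inI z) by (unfold inI in *; lra).
  split; auto. apply (HJ (g x) (g y)); auto; split; apply good_map_mono; auto; lra.
Qed.

Lemma interval_lt b : interval (fun x => x < b).
Proof. intros x y z; lra. Qed.
Lemma interval_open a b : interval (fun x => a < x < b).
Proof. intros x y z; lra. Qed.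
Lemma interval_True : interval (fun _ => True).
Proof. intros x y z; auto. Qed.

(* At an interior point a good map has a positive derivative (it is increasing, and its
   derivative never vanishes). *)
Lemma good_map_deriv_pos g x : good_map g -> 0 < x < 1 ->
  exists l, derivable_pt_lim g x l /\ 0 < l.
Proof.
  intros [_ [Hinc [dg [Hd [_ Hnz]]]]] Hx.
  assert (HxI : inI x) by (unfold inI; lra).
  exists (dg x); split; auto. specialize (Hnz x HxI).
  destruct (Rtotal_order (dg x) 0) as [Hneg|[|]]; [exfalso|contradiction|auto].
  destruct (Hd x HxI (- dg x) ltac:(lra)) as [delta Hdelta].
  set (h := Rmin (delta / 2) ((1 - x) / 2)).
  assert (Hh : 0 < h) by (apply Rmin_pos; [pose proof (cond_pos delta)|]; lra).
  assert (Hh1 : h <= delta / 2) by apply Rmin_l.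
  assert (Hh2 : h <= (1 - x) / 2) by apply Rmin_r.
  specialize (Hdelta h ltac:(lra)). rewrite Rabs_pos_eq in Hdelta by lra.
  specialize (Hdelta ltac:(pose proof (cond_pos delta); lra)).
  assert (g x < g (x + h)) by (apply Hinc; unfold inI; lra).
  assert (0 < (g (x + h) - g x) / h) by (apply Rdiv_lt_0_compat; lra).
  pose proof (Rle_abs ((g (x + h) - g x) / h - dg x)); lra.
Qed.

Lemma nsum_pos n g : (0 < nsum n g)%nat -> exists l, (l < n)%nat /\ (0 < g l)%nat.
Proof.
  induction n as [|n IH]; simpl; intros H; [lia|].
  destruct (Nat.eq_dec (g n) 0); [destruct IH as [l [h1 h2]]; [lia|exists l; split; auto]|exists n; split; lia].
Qed.

(* A set of states closed under admissible transitions is everything as soon as it is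
   nonempty, since some power of [A] is positive. *)
Lemma irreducible_forward N A P (Z : nat -> Prop) :
  zero_one_matrix N A -> has_positive_power N A -> compatible N A P ->
  (forall l j, (l < N)%nat -> (j < N)%nat -> admissible P l j -> Z l -> Z j) ->
  forall i j, (i < N)%nat -> (j < N)%nat -> Z i -> Z j.
Proof.
  intros H01 [n [_ Hpow]] Hc HZ i j hi hj hz. specialize (Hpow i j hi hj).
  revert j hj Hpow; induction n as [|n IH]; simpl; intros j hj Hp.
  - destruct (Nat.eqb_spec i j) as [<-|]; auto; lia.
  - destruct (nsum_pos _ _ Hp) as [l [hl Hl]].
    apply (HZ l j); auto; [|apply IH; auto; lia].
    apply Hc; auto; destruct (H01 l j hl hj); lia.
Qed.

Fixpoint walk (E : nat -> nat -> Prop) (l : list nat) : Prop :=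
  match l with
  | x :: ((y :: _) as r) => E x y /\ walk E r
  | _ => True
  end.

Fixpoint weight (c : nat -> R) (l : list nat) : R :=
  match l with [] => 1 | x :: r => c x * weight c r end.

(* A simple cycle, listed without repeating its first vertex at the end. *)
Definition simple_cycle (E : nat -> nat -> Prop) (l : list nat) : Prop :=
  l <> [] /\ NoDup l /\ walk E (l ++ [hd 0%nat l]).

Definition simple_walk_to (E : nat -> nat -> Prop) (j : nat) (q : list nat) : Prop :=
  NoDup (q ++ [j]) /\ walk E (q ++ [j]).

Lemma walk_app_cons E l1 x l2 :
  walk E (l1 ++ x :: l2) <-> walk E (l1 ++ [x]) /\ walk E (x :: l2).
Proof.
  induction l1 as [|a [|b l1] IH]; simpl; [tauto|tauto|].
  simpl in IH; rewrite IH; tauto.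
Qed.

Lemma walk_snoc E l y : l <> [] -> (walk E (l ++ [y]) <-> walk E l /\ E (last l 0%nat) y).
Proof.
  intros Hl. rewrite (app_removelast_last 0%nat Hl) at 1.
  rewrite <- app_assoc; simpl app; rewrite walk_app_cons, <- (app_removelast_last 0%nat Hl).
  simpl; tauto.
Qed.

Lemma walk_mono (E E' : nat -> nat -> Prop) l :
  (forall i j, E i j -> E' i j) -> walk E l -> walk E' l.
Proof.
  intros H; induction l as [|x l IH]; simpl; auto.
  destruct l as [|y l]; auto; intros [h1 h2]; auto.
Qed.

Lemma simple_cycle_mono (E E' : nat -> nat -> Prop) l :
  (forall i j, E i j -> E' i j) -> simple_cycle E l -> simple_cycle E' l.
Proof. intros H [h1 [h2 h3]]; repeat split; auto; eapply walk_mono; eauto. Qed.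

Lemma walk_source E q j x : walk E (q ++ [j]) -> In x q -> exists y, E x y.
Proof.
  revert x; induction q as [|a [|b q] IH]; intros x H Hx; [destruct Hx| |].
  - destruct Hx as [<-|[]]; destruct H; eauto.
  - destruct H as [h1 h2]; destruct Hx as [<-|Hx]; eauto.
Qed.

Lemma last_app_cons (l1 l2 : list nat) x d : last (l1 ++ x :: l2) d = last (x :: l2) d.
Proof. induction l1 as [|a l1 IH]; simpl; auto; rewrite IH; destruct l1; auto. Qed.

Lemma weight_app c l1 l2 : weight c (l1 ++ l2) = weight c l1 * weight c l2.
Proof. induction l1; simpl; [|rewrite IHl1]; ring. Qed.

Lemma weight_pos c l : (forall x, In x l -> 0 < c x) -> 0 < weight c l.
Proof. induction l; simpl; intros H; [lra|apply Rmult_lt_0_compat; auto]. Qed.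

Lemma weight_scal c t l : weight (fun i => t * c i) l = t ^ length l * weight c l.
Proof. induction l; simpl; [|rewrite IHl]; ring. Qed.

Lemma weight_inv d l : weight (fun i => / d i) l = / weight d l.
Proof. induction l; simpl; [now rewrite Rinv_1|now rewrite IHl, Rinv_mult]. Qed.

Lemma weight_perm c l l' : Permutation l l' -> weight c l = weight c l'.
Proof. induction 1; simpl; try congruence; ring. Qed.

Lemma walk_shortcut E x p : walk E (x :: p) ->
  exists q, walk E (x :: q) /\ NoDup (x :: q) /\ last (x :: q) 0%nat = last (x :: p) 0%nat.
Proof.
  revert x; induction p as [|y p IH]; intros x H.
  { exists []; repeat split; auto; repeat constructor; auto. }
  destruct H as [Hxy Hw]. destruct (IH y Hw) as [q [Hq1 [Hq2 Hq3]]].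
  destruct (classic (In x (y :: q))) as [Hin|Hnin].
  - destruct (in_split _ _ Hin) as [l1 [l2 Hl]]. exists l2. rewrite Hl in Hq1, Hq2, Hq3.
    repeat split; [apply walk_app_cons in Hq1; tauto|eapply NoDup_app_remove_l; eauto|].
    rewrite last_app_cons in Hq3; rewrite Hq3; reflexivity.
  - exists (y :: q); repeat split; [auto|auto|constructor; auto|exact Hq3].
Qed.

Lemma simple_cycle_rotate E l u : simple_cycle E l -> In u l ->
  exists l', simple_cycle E (u :: l') /\ Permutation l (u :: l').
Proof.
  intros [_ [Hnd Hw]] Hu. destruct (in_split _ _ Hu) as [l1 [l2 ->]].
  assert (Hp : Permutation (l1 ++ u :: l2) (u :: l2 ++ l1)).
  { eapply perm_trans; [apply Permutation_sym, Permutation_middle|].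
    apply perm_skip, Permutation_app_comm. }
  exists (l2 ++ l1); split; auto. split; [discriminate|split; [eapply Permutation_NoDup; eauto|]].
  destruct l1 as [|h t]; [simpl in *; now rewrite app_nil_r|].
  simpl hd in *. rewrite <- app_assoc in Hw; simpl app in Hw at 2.
  apply (walk_app_cons E (h :: t) u (l2 ++ [h])) in Hw.
  replace ((u :: l2 ++ h :: t) ++ [u]) with ((u :: l2) ++ h :: (t ++ [u]))
    by (simpl; now rewrite <- app_assoc).
  apply walk_app_cons; tauto.
Qed.

Fixpoint lists_upto (N n : nat) : list (list nat) :=
  match n with
  | O => [[]]
  | S n => [] :: flat_map (fun x => map (cons x) (lists_upto N n)) (seq 0 N)
  end.

Lemma lists_upto_complete N n l : (length l <= n)%nat -> (forall x, In x l -> (x < N)%nat) ->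
  In l (lists_upto N n).
Proof.
  revert l; induction n as [|n IH]; intros l hl hx; [destruct l; simpl in *; [auto|lia]|].
  destruct l as [|a l]; simpl; [auto|right].
  apply in_flat_map; exists a; split; [apply in_seq; specialize (hx a (or_introl eq_refl)); lia|].
  apply in_map, IH; [simpl in hl; lia|intros; apply hx; simpl; auto].
Qed.

Lemma nodup_length_bound N l : NoDup l -> (forall x, In x l -> (x < N)%nat) -> (length l <= N)%nat.
Proof.
  intros H hx. rewrite <- (length_seq N 0). apply NoDup_incl_length; auto.
  intros x h; apply in_seq; specialize (hx x h); lia.
Qed.

Lemma list_argmax (L : list (list nat)) (Q : list nat -> Prop) (g : list nat -> R) :
  (exists p, In p L /\ Q p) -> exists p, In p L /\ Q p /\ forall q, In q L -> Q q -> g q <= g p.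
Proof.
  induction L as [|a L IH]; intros [p [hp hq]]; [destruct hp|].
  destruct (classic (exists p, In p L /\ Q p)) as [h|h].
  - destruct (IH h) as [p' [h1 [h2 h3]]].
    destruct (classic (Q a /\ g p' < g a)) as [[ha1 ha2]|ha].
    + exists a; split; [left; auto|split; auto]. intros q [<-|hq'] hqq; [lra|]. specialize (h3 q hq' hqq); lra.
    + exists p'; split; [right; auto|split; auto]. intros q [<-|hq'] hqq; auto.
      apply Rnot_lt_le; intros hl; apply ha; auto.
  - destruct hp as [<-|hp]; [|exfalso; apply h; eauto].
    exists a; split; [left; auto|split; auto]. intros q [<-|hq'] hqq; [lra|exfalso; apply h; eauto].
Qed.

Lemma finite_argmax N (Q : list nat -> Prop) (g : list nat -> R) :
  (forall q, Q q -> NoDup q /\ forall x, In x q -> (x < N)%nat) -> (exists q, Q q) ->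
  exists p, Q p /\ forall q, Q q -> g q <= g p.
Proof.
  intros H [q0 hq0].
  assert (Hin : forall q, Q q -> In q (lists_upto N N))
    by (intros q hq; destruct (H q hq); apply lists_upto_complete; auto; apply nodup_length_bound; auto).
  destruct (list_argmax (lists_upto N N) Q g) as [p [_ [h1 h2]]]; eauto.
Qed.

(** * Potentials for graphs whose simple cycles have weight less than one *)

Section Potential.
Variable N : nat.
Variable E : nat -> nat -> Prop.
Hypothesis HE : forall i j, E i j -> (i < N)%nat /\ (j < N)%nat.

Lemma simple_cycle_bound l : simple_cycle E l -> forall x, In x l -> (x < N)%nat.
Proof. intros [_ [_ Hw]] x hx; destruct (walk_source E l _ x Hw hx) as [y hy]; apply HE in hy; tauto. Qed.

Lemma simple_walk_step i j q : simple_walk_to E i q -> E i j ->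
  simple_walk_to E j (q ++ [i]) \/
  exists l1 l2, q ++ [i] = l1 ++ j :: l2 /\ simple_walk_to E j l1 /\ simple_cycle E (j :: l2).
Proof.
  intros [Hnd Hw] Hij. destruct (classic (In j (q ++ [i]))) as [Hin|Hnin].
  - right. destruct (in_split _ _ Hin) as [l1 [l2 Hsplit]]. exists l1, l2; split; auto.
    rewrite Hsplit in Hnd, Hw. split; [split|].
    + replace (l1 ++ j :: l2) with ((l1 ++ [j]) ++ l2) in Hnd by (now rewrite <- app_assoc).
      eapply NoDup_app_remove_r; eauto.
    + apply walk_app_cons in Hw; tauto.
    + split; [discriminate|split; [eapply NoDup_app_remove_l; eauto|]].
      simpl hd. rewrite walk_snoc by discriminate. apply walk_app_cons in Hw.
      split; [tauto|]. replace (last (j :: l2) 0%nat) with i; [auto|].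
      now rewrite <- last_app_cons with (l1 := l1), <- Hsplit, last_last.
  - left. split; [apply NoDup_app; auto; [repeat constructor; auto|intros a ha [<-|[]]; auto]|].
    rewrite walk_snoc by (destruct q; discriminate). split; auto; now rewrite last_last.
Qed.

(* If every simple cycle has weight [< 1], the maximal weight [phi j] of a simple walk
   ending at [j] is a potential: [c i * phi i <= phi j] along every edge [i -> j]. *)
Lemma potential (c : nat -> R) : (forall i, (i < N)%nat -> 0 < c i) ->
  (forall l, simple_cycle E l -> weight c l < 1) ->
  exists phi : nat -> R, (forall j, (j < N)%nat -> 1 <= phi j) /\
    forall i j, E i j -> c i * phi i <= phi j.
Proof.
  intros Hc Hcyc.
  assert (HQ : forall j q, simple_walk_to E j q -> NoDup q /\ forall x, In x q -> (x < N)%nat).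
  { intros j q [h1 h2]; split; [eapply NoDup_app_remove_r; eauto|].
    intros x hx; destruct (walk_source E q j x h2 hx) as [y hy]; apply HE in hy; tauto. }
  assert (Hnil : forall j, simple_walk_to E j []) by (intros j; split; simpl; auto; repeat constructor; auto).
  destruct (finite_choice (@nil nat) N (fun j p => simple_walk_to E j p /\
              forall q, simple_walk_to E j q -> weight c q <= weight c p)) as [best Hbest].
  { intros j hj; apply (finite_argmax N (simple_walk_to E j) (weight c)); eauto. }
  exists (fun j => weight c (best j)); split; [intros j hj; apply (proj2 (Hbest j hj) []); auto|].
  intros i j Hij. destruct (HE i j Hij) as [hi hj].
  destruct (Hbest i hi) as [Hbi _]. destruct (Hbest j hj) as [_ Hmax].
  assert (Hl : weight c (best i ++ [i]) = c i * weight c (best i)) by (rewrite weight_app; simpl; ring).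
  assert (Hpos : forall x, In x (best i ++ [i]) -> 0 < c x).
  { intros x hx; apply in_app_or in hx.
    destruct hx as [hx|[<-|[]]]; auto; apply Hc, (HQ i (best i)); auto. }
  destruct (simple_walk_step i j (best i) Hbi Hij) as [Hext|[l1 [l2 [Hsplit [Hl1 Hcy]]]]].
  - specialize (Hmax _ Hext); lra.
  - (* the cycle through [j] has weight [< 1], so the walk to [j] alone weighs more *)
    specialize (Hmax l1 Hl1). specialize (Hcyc _ Hcy).
    rewrite Hsplit, weight_app in Hl.
    assert (0 < weight c l1) by (apply weight_pos; intros x hx; apply Hpos; rewrite Hsplit; apply in_or_app; auto).
    assert (weight c l1 * weight c (j :: l2) <= weight c l1 * 1) by (apply Rmult_le_compat_l; lra).
    lra.
Qed.

(* Since there are finitely many simple cycles, a strict bound [< 1] on their weights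
   survives multiplying all vertex weights by some [t > 1]. *)
Lemma cycle_margin (c : nat -> R) : (forall i, (i < N)%nat -> 0 < c i) ->
  (forall l, simple_cycle E l -> weight c l < 1) ->
  exists t, 1 < t /\ forall l, simple_cycle E l -> weight (fun i => t * c i) l < 1.
Proof.
  intros Hc Hcyc. destruct (classic (exists l, simple_cycle E l)) as [Hex|Hno].
  2:{ exists 2; split; [lra|intros l hl; exfalso; eauto]. }
  destruct (finite_argmax N (simple_cycle E) (weight c)) as [l0 [Hl0 Hmax]]; auto.
  { intros q hq; split; [apply hq|now apply simple_cycle_bound]. }
  set (G := weight c l0).
  assert (Hcpos : forall l, simple_cycle E l -> 0 < weight c l)
    by (intros l hl; apply weight_pos; intros x hx; apply Hc; eapply simple_cycle_bound; eauto).
  assert (HG0 : 0 < G) by now apply Hcpos. assert (HG1 : G < 1) by now apply Hcyc.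
  assert (HN : (0 < N)%nat).
  { destruct l0 as [|x l0']; [destruct Hl0; congruence|].
    assert (x < N)%nat by (eapply simple_cycle_bound; eauto; left; auto); lia. }
  set (b := 2 / (1 + G)).
  assert (Hb : 1 < b) by (unfold b; apply (Rmult_lt_reg_r (1 + G)); [lra|field_simplify; lra]).
  assert (HbG : b * G < 1) by (unfold b; apply (Rmult_lt_reg_r (1 + G)); [lra|field_simplify; lra]).
  assert (HN' : 0 < INR N) by (apply lt_0_INR; lia).
  set (t := Rpower b (/ INR N)).
  assert (HtN : t ^ N = b).
  { unfold t. rewrite <- Rpower_pow by (apply exp_pos).
    rewrite Rpower_mult, Rinv_l by lra. apply Rpower_1; lra. }
  assert (Ht1 : 1 < t).
  { apply Rnot_le_lt; intros h. assert (t ^ N <= 1 ^ N) by (apply pow_incr; split; [unfold t, Rpower; left; apply exp_pos|auto]).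
    rewrite pow1 in *; lra. }
  exists t; split; auto. intros l hl. rewrite weight_scal.
  assert (hlen : (length l <= N)%nat) by (apply nodup_length_bound; [apply hl|now apply simple_cycle_bound]).
  assert (t ^ length l <= t ^ N) by (apply Rle_pow; [lra|auto]).
  assert (weight c l <= G) by now apply Hmax.
  pose proof (Hcpos l hl).
  assert (t ^ length l * weight c l <= b * G); [|lra].
  rewrite <- HtN; apply Rmult_le_compat; try lra; apply pow_le; lra.
Qed.

Lemma contracting_potential (c : nat -> R) : (forall i, (i < N)%nat -> 0 < c i) ->
  (forall l, simple_cycle E l -> weight c l < 1) ->
  exists t phi, 1 < t /\ (forall j, (j < N)%nat -> 1 <= phi j) /\
    forall i j, E i j -> t * c i * phi i <= phi j.
Proof.
  intros Hc Hcyc. destruct (cycle_margin c Hc Hcyc) as [t [Ht Htc]].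
  destruct (potential (fun i => t * c i)) as [phi [Hphi1 Hphi2]]; auto.
  { intros i hi; apply Rmult_lt_0_compat; auto; lra. }
  exists t, phi; auto.
Qed.

End Potential.

Lemma expanding_potential N E d : (forall i j, E i j -> (i < N)%nat /\ (j < N)%nat) ->
  (forall i, (i < N)%nat -> 0 < d i) -> (forall l, simple_cycle E l -> 1 < weight d l) ->
  exists t s, 1 < t /\ (forall k, (k < N)%nat -> 0 < s k) /\
    forall i j, E i j -> s j * t <= d i * s i.
Proof.
  intros HE Hd Hcyc.
  destruct (contracting_potential N E HE (fun i => / d i)) as [t [phi [Ht [Hphi1 Hphi2]]]].
  { intros i hi; apply Rinv_0_lt_compat; auto. }
  { intros l hl. rewrite weight_inv. specialize (Hcyc l hl).
    rewrite <- Rinv_1; apply Rinv_lt_contravar; lra. }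
  exists t, (fun k => / phi k); split; auto.
  split; [intros k hk; apply Rinv_0_lt_compat; specialize (Hphi1 k hk); lra|].
  intros i j Hij. destruct (HE i j Hij) as [hi hj].
  specialize (Hphi2 i j Hij). pose proof (Hphi1 i hi); pose proof (Hphi1 j hj); pose proof (Hd i hi).
  apply (Rmult_le_reg_r (phi i * phi j * / d i)); [apply Rmult_lt_0_compat; [nra|apply Rinv_0_lt_compat; lra]|].
  replace (/ phi j * t * (phi i * phi j * / d i)) with (t * / d i * phi i) by (field; lra).
  replace (d i * / phi i * (phi i * phi j * / d i)) with (phi j) by (field; lra). lra.
Qed.

Record standing (N : nat) (A : nat -> nat -> nat) (P : nat -> nat -> R)
    (f : nat -> R -> R) (mu : nat -> (R -> Prop) -> R) : Prop := {
  st_zero_one : zero_one_matrix N A;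
  st_primitive : has_positive_power N A;
  st_stochastic : stochastic N P;
  st_compatible : compatible N A P;
  st_maps : forall k, (k < N)%nat -> good_map (f k);
  st_G1 : G1 N P f;
  st_G2 : G2 N P f;
  st_G3 : G3 N P f;
  st_stationary : stationary N P f mu
}.

Definition lower_end (mu : nat -> (R -> Prop) -> R) (a : nat -> R) (k : nat) : Prop :=
  0 < a k /\ a k < 1 /\ supp (mu k) (a k) /\ (forall x, supp (mu k) x -> a k <= x) /\
  mu k (fun x => x < a k) = 0.

Section LowerEnds.
Variables (N : nat) (A : nat -> nat -> nat) (P : nat -> nat -> R).
Variables (f : nat -> R -> R) (mu : nat -> (R -> Prop) -> R).
Hypothesis HS : standing N A P f mu.

Lemma mu_measure k : (k < N)%nat -> finite_measure (mu k).
Proof. intros hk; apply (proj1 (proj1 (st_stationary _ _ _ _ _ HS)) k hk). Qed.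

Lemma mu_carried k : (k < N)%nat -> mu k (fun x => ~ inI x) = 0.
Proof. intros hk; apply (proj1 (proj1 (st_stationary _ _ _ _ _ HS)) k hk). Qed.

Lemma P_nonneg i j : (i < N)%nat -> (j < N)%nat -> 0 <= P i j.
Proof. apply (st_stochastic _ _ _ _ _ HS). Qed.

Definition inflow (i j : nat) (J : R -> Prop) : R := P i j * mu i (fun x => inI x /\ J (f i x)).

Lemma inflow_nonneg i j J : (i < N)%nat -> (j < N)%nat -> interval J -> 0 <= inflow i j J.
Proof.
  intros hi hj HJ. apply Rmult_le_pos; [now apply P_nonneg|].
  apply meas_nonneg; [now apply mu_measure|apply good_map_preimage_borel; auto; now apply HS].
Qed.

Lemma stationary_interval j J : (j < N)%nat -> borel J -> mu j J = Rsum N (fun i => inflow i j J).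
Proof. intros hj HJ; apply (st_stationary _ _ _ _ _ HS); auto. Qed.

Lemma inflow_le i j J : (i < N)%nat -> (j < N)%nat -> interval J -> borel J -> inflow i j J <= mu j J.
Proof.
  intros hi hj HJ HB. rewrite stationary_interval by auto.
  apply (Rsum_term_le N (fun i => inflow i j J)); auto; intros; now apply inflow_nonneg.
Qed.

Lemma mass_pos k : (k < N)%nat -> 0 < mu k (fun _ => True).
Proof.
  intros hk.
  assert (Hinflow : forall i j, (i < N)%nat -> (j < N)%nat ->
            inflow i j (fun _ => True) = P i j * mu i (fun _ => True)).
  { intros i j hi hj; unfold inflow; f_equal; symmetry.
    apply meas_restrict; [now apply mu_measure|now apply mu_carried|apply borel_True]. }
  destruct (st_stationary _ _ _ _ _ HS) as [[_ Htotal] _].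
  destruct (Rsum_pos_ex N (fun k => mu k (fun _ => True))) as [i [hi Hi]]; [lra|].
  apply (irreducible_forward N A P (fun k => 0 < mu k (fun _ => True))) with i; try apply HS; auto.
  intros l j hl hj Hadm Hl. eapply Rlt_le_trans; [|apply (inflow_le l j); auto using interval_True, borel_True].
  rewrite Hinflow by auto; apply Rmult_lt_0_compat; auto.
Qed.

Lemma image_in_support i k x : (i < N)%nat -> (k < N)%nat -> admissible P i k ->
  inI x -> supp (mu i) x -> supp (mu k) (f i x).
Proof.
  intros hi hk Hadm hx Hsupp d hd. set (y := f i x).
  destruct (st_maps _ _ _ _ _ HS i hi) as [_ [_ [df [Hdf _]]]].
  destruct (deriv_continuous _ _ _ (Hdf x hx) d hd) as [eta [Heta Hcont]].
  eapply Rlt_le_trans; [|apply (inflow_le i k); auto using interval_open, borel_open].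
  apply Rmult_lt_0_compat; [exact Hadm|].
  eapply Rlt_le_trans; [apply (Hsupp eta Heta)|].
  rewrite (meas_restrict (mu i)) by (auto using mu_measure, mu_carried, borel_open).
  apply meas_mono.
  { now apply mu_measure. }
  { apply borel_inter; [apply borel_inI|apply borel_open]. }
  { apply (good_map_preimage_borel (f i) (fun z => y - d < z < y + d)); [now apply HS|apply interval_open]. }
  intros z [hz1 hz2]; split; auto.
  assert (Rabs (z - x) < eta) by (apply Rabs_def1; lra).
  specialize (Hcont z H); apply Rabs_def2 in Hcont; unfold y; lra.
Qed.

Lemma lower_ends_exist : exists a, forall k, (k < N)%nat -> lower_end mu a k.
Proof.
  destruct (finite_choice 0 N (fun k a => 0 <= a <= 1 /\ supp (mu k) a /\
              (forall x, supp (mu k) x -> a <= x) /\ mu k (fun x => x < a) = 0)) as [a Ha].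
  { intros k hk; apply lower_endpoint; auto using mu_measure, mu_carried, mass_pos. }
  exists a; intros k hk. destruct (Ha k hk) as [Hak [Hsupp [Hmin Hnull]]].
  split; [|split; auto].
  - (* below [min_i f i 0] nothing arrives *)
    destruct (finite_pos_lower_bound N (fun i => f i 0)) as [c [Hc Hci]].
    { intros i hi; apply (st_maps _ _ _ _ _ HS i hi); unfold inI; lra. }
    apply Rlt_le_trans with c; auto. apply (null_ray_supp (mu k)); auto using mu_measure.
    rewrite stationary_interval, <- (Rsum_zero N) by (auto using borel_lt).
    apply Rsum_ext; intros i hi. unfold inflow.
    replace (fun x => inI x /\ f i x < c) with (fun _ : R => False).
    + rewrite (proj1 (mu_measure i hi)); ring.
    + apply set_ext; intros x; split; [tauto|intros [hx hfx]].
      assert (f i 0 <= f i x) by (apply good_map_mono; [apply HS; auto|unfold inI; lra|auto|unfold inI in hx; lra]).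
      specialize (Hci i hi); lra.
  - (* some admissible [i] feeds [mu k], and then [a k <= f i (a i) < 1] *)
    pose proof (mass_pos k hk) as Hpos. rewrite stationary_interval in Hpos by (auto using borel_True).
    destruct (Rsum_pos_ex N _ Hpos) as [i [hi Hi]].
    assert (Hadm : admissible P i k).
    { unfold admissible, inflow in *. destruct (Rle_lt_or_eq_dec 0 (P i k)) as [|e]; auto using P_nonneg.
      rewrite <- e in Hi; lra. }
    destruct (Ha i hi) as [Hai [Hsi _]].
    assert (a k <= f i (a i)) by (apply Hmin, image_in_support; auto; unfold inI; lra).
    pose proof (proj1 (st_maps _ _ _ _ _ HS i hi) (a i) Hai); lra.
Qed.

Lemma lower_end_admissible a i k : (forall k, (k < N)%nat -> lower_end mu a k) ->
  (i < N)%nat -> (k < N)%nat -> admissible P i k -> a k <= f i (a i).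
Proof.
  intros Ha hi hk Hadm. destruct (Ha i hi) as [h1 [h2 [h3 _]]].
  apply (Ha k hk), image_in_support; auto; unfold inI; lra.
Qed.

End LowerEnds.

(** * The tight graph of the lower ends *)

(* [i -> j] is tight when it is admissible and [f i] maps the lower end [a i] exactly
   to [a j]; a tight simple cycle is then a fixed point of a simple return. *)
Definition tight (N : nat) (P : nat -> nat -> R) (f : nat -> R -> R) (a : nat -> R)
    (i j : nat) : Prop :=
  (i < N)%nat /\ (j < N)%nat /\ admissible P i j /\ f i (a i) = a j.

Section TightGraph.
Variables (N : nat) (P : nat -> nat -> R) (f : nat -> R -> R) (a d : nat -> R).
Hypothesis Hder : forall k, (k < N)%nat ->
  derivable_pt_lim (f k) (a k) (d k) /\ inI (a k) /\ 0 < d k.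

Let T := tight N P f a.

Lemma tight_bound i j : T i j -> (i < N)%nat /\ (j < N)%nat.
Proof. intros [h1 [h2 _]]; auto. Qed.

Lemma tight_walk_admissible l : walk T l -> (forall x, In x l -> (x < N)%nat) -> adm_chain N P l.
Proof.
  induction l as [|x l IH]; intros Hw Hb; simpl; auto.
  split; [apply Hb; left; auto|]. destruct l as [|y l]; auto.
  destruct Hw as [[_ [_ [Hadm _]]] Hw]; split; auto. apply IH; auto; intros z hz; apply Hb; right; auto.
Qed.

Lemma tight_walk_bound x l : (x < N)%nat -> walk T (x :: l) -> forall z, In z (x :: l) -> (z < N)%nat.
Proof.
  revert x; induction l as [|y l IH]; intros x hx Hw z hz; [destruct hz as [<-|[]]; auto|].
  destruct Hw as [[_ [hy _]] Hw]. destruct hz as [<-|hz]; auto. apply (IH y); auto.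
Qed.

Lemma tight_cycle_bound l : simple_cycle T l -> forall x, In x l -> (x < N)%nat.
Proof. apply simple_cycle_bound, tight_bound. Qed.

Lemma comp_along_tight_walk q j : q <> [] -> walk T (q ++ [j]) ->
  Defs.comp f (q ++ [j]) (a (hd 0%nat q)) = a j /\
  derivable_pt_lim (Defs.comp f (q ++ [j])) (a (hd 0%nat q)) (weight d q).
Proof.
  induction q as [|x [|y q] IH]; intros Hne Hw; [congruence| |].
  - destruct Hw as [[hx [hj [_ Hfx]]] _]; simpl. rewrite Rmult_1_r; split; auto; now apply Hder.
  - destruct Hw as [[hx [hy [_ Hfx]]] Hw].
    destruct (IH ltac:(discriminate) Hw) as [Hfix Hdiff]. simpl hd in *.
    change (Defs.comp f ((x :: y :: q) ++ [j])) with (fun z => Defs.comp f ((y :: q) ++ [j]) (f x z)).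
    split; [cbv beta; now rewrite Hfx|].
    replace (weight d (x :: y :: q)) with (weight d (y :: q) * d x) by (simpl; ring).
    apply (derivable_pt_lim_comp (f x)); [now apply Hder|now rewrite Hfx].
Qed.

Lemma tight_cycle_simple_return c : simple_cycle T c -> simple_return N P (c ++ [hd 0%nat c]).
Proof.
  intros Hc. pose proof Hc as [Hne [Hnd Hw]]. destruct c as [|k w']; [congruence|].
  split; [split; [simpl; rewrite length_app; simpl; lia|]|exists k, w'; split; auto].
  apply tight_walk_admissible; auto. intros x hx; apply in_app_or in hx.
  destruct hx as [hx|[<-|[]]]; apply (tight_cycle_bound _ Hc); simpl; auto.
Qed.

Lemma tight_cycle_fixed u c : simple_cycle T (u :: c) ->
  fixed_pt (Defs.comp f ((u :: c) ++ [u])) (a u) /\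
  derivable_pt_lim (Defs.comp f ((u :: c) ++ [u])) (a u) (weight d (u :: c)) /\
  0 < weight d (u :: c).
Proof.
  intros Hc. assert (hu : (u < N)%nat) by (apply (tight_cycle_bound _ Hc); left; auto).
  destruct (comp_along_tight_walk (u :: c) u) as [Hfix Hdiff]; [discriminate|apply Hc|].
  split; [split; auto; now apply Hder|split; auto].
  apply weight_pos; intros x hx; apply Hder, (tight_cycle_bound _ Hc); auto.
Qed.

Lemma tight_cycle_not_neutral c : G1 N P f -> simple_cycle T c -> weight d c <> 1.
Proof.
  intros HG1 Hc. destruct c as [|u c]; [destruct Hc; congruence|].
  destruct (tight_cycle_fixed u c Hc) as [Hfix [Hdiff _]].
  apply (HG1 _ _ _ (tight_cycle_simple_return _ Hc) Hfix Hdiff).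
Qed.

Lemma tight_cycle_attracting u c : simple_cycle T (u :: c) -> weight d (u :: c) < 1 ->
  attracting_fixed_pt (Defs.comp f ((u :: c) ++ [u])) (a u).
Proof.
  intros Hc Hw. destruct (tight_cycle_fixed u c Hc) as [Hfix [Hdiff Hpos]].
  split; auto; exists (weight d (u :: c)); split; auto; rewrite Rabs_pos_eq; lra.
Qed.

Lemma tight_cycle_repelling u c : simple_cycle T (u :: c) -> 1 < weight d (u :: c) ->
  repelling_fixed_pt (Defs.comp f ((u :: c) ++ [u])) (a u).
Proof.
  intros Hc Hw. destruct (tight_cycle_fixed u c Hc) as [Hfix [Hdiff Hpos]].
  split; auto; exists (weight d (u :: c)); split; auto; rewrite Rabs_pos_eq; lra.
Qed.

Lemma tight_transition_mixed u c v c' q : G2 N P f ->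
  simple_cycle T (u :: c) -> simple_cycle T (v :: c') ->
  q <> [] -> walk T (u :: q) -> NoDup (u :: q) -> last (u :: q) 0%nat = v ->
  (weight d (u :: c) < 1 /\ 1 < weight d (v :: c')) \/
  (1 < weight d (u :: c) /\ weight d (v :: c') < 1) -> False.
Proof.
  intros HG2 Hu Hv Hq Hw Hnd Hlast Hmixed.
  assert (hu : (u < N)%nat) by (apply (tight_cycle_bound _ Hu); left; auto).
  assert (Hsplit : u :: q = removelast (u :: q) ++ [v])
    by (rewrite <- Hlast; apply app_removelast_last; discriminate).
  assert (Hhead : removelast (u :: q) = u :: removelast q) by (destruct q; [congruence|reflexivity]).
  assert (Himage : Defs.comp f (u :: q) (a u) = a v).
  { rewrite Hsplit. replace (a u) with (a (hd 0%nat (removelast (u :: q)))) by (rewrite Hhead; auto).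
    apply comp_along_tight_walk; [rewrite Hhead; discriminate|rewrite <- Hsplit; auto]. }
  assert (Htrans : simple_transition N P (u :: q)).
  { split; auto; split; [simpl; destruct q; [congruence|simpl; lia]|].
    apply tight_walk_admissible; auto; now apply tight_walk_bound. }
  destruct (HG2 (u :: q) ((u :: c) ++ [u]) ((v :: c') ++ [v]) (a u) Htrans
              (tight_cycle_simple_return _ Hu) (tight_cycle_simple_return _ Hv) eq_refl)
    as [C1 C2]; [simpl hd; now rewrite <- Hlast|].
  rewrite Himage in C1, C2.
  destruct Hmixed as [[h1 h2]|[h1 h2]]; [apply C1|apply C2];
    auto using tight_cycle_attracting, tight_cycle_repelling.
Qed.

Lemma no_tight_walk_attracting_to_repelling C1 C2 u p : G2 N P f ->
  simple_cycle T C1 -> simple_cycle T C2 -> weight d C1 < 1 -> 1 < weight d C2 ->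
  In u C1 -> walk T (u :: p) -> In (last (u :: p) 0%nat) C2 -> False.
Proof.
  intros HG2 H1 H2 Hw1 Hw2 Hu Hwalk Hend.
  destruct (walk_shortcut _ u p Hwalk) as [q [Hq1 [Hq2 Hq3]]]. rewrite <- Hq3 in Hend.
  destruct (simple_cycle_rotate _ C1 u H1 Hu) as [c [Hc Pc]]. rewrite (weight_perm d _ _ Pc) in Hw1.
  destruct q as [|q0 q].
  2:{ destruct (simple_cycle_rotate _ C2 _ H2 Hend) as [c' [Hc' Pc']].
      rewrite (weight_perm d _ _ Pc') in Hw2.
      apply (tight_transition_mixed u c (last (u :: q0 :: q) 0%nat) c' (q0 :: q)); auto; discriminate. }
  (* [u] lies on both cycles: use the edge leaving [u] along one of them *)
  simpl in Hend. destruct (simple_cycle_rotate _ C2 u H2 Hend) as [c' [Hc' Pc']].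
  rewrite (weight_perm d _ _ Pc') in Hw2.
  assert (Hedge : forall v w, simple_cycle T (u :: v :: w) ->
            walk T [u; v] /\ NoDup [u; v] /\ exists z, simple_cycle T (v :: z) /\
            Permutation (u :: v :: w) (v :: z)).
  { intros v w Hcyc. pose proof Hcyc as [_ [Hnd [Huv _]]]. split; [simpl; auto|split].
    - constructor; [intros [e|[]]; subst; inversion Hnd; subst; simpl in *; tauto|repeat constructor; auto].
    - apply simple_cycle_rotate; simpl; auto. }
  destruct c' as [|v w].
  - destruct c as [|v w]; [simpl in Hw1, Hw2; lra|].
    destruct (Hedge v w Hc) as [Hwk [Hnd [z [Hz Pz]]]].
    apply (tight_transition_mixed u [] v z [v]); auto; [discriminate|].
    right; split; [auto|now rewrite <- (weight_perm d _ _ Pz)].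
  - destruct (Hedge v w Hc') as [Hwk [Hnd [z [Hz Pz]]]].
    apply (tight_transition_mixed u c v z [v]); auto; [discriminate|].
    left; split; [auto|now rewrite <- (weight_perm d _ _ Pz)].
Qed.

End TightGraph.

Lemma slope_bounds g x0 l th : derivable_pt_lim g x0 l -> 0 < l -> 1 < th ->
  exists delta, 0 < delta /\ forall tau, 0 < tau < delta ->
    g x0 + l * tau / th < g (x0 + tau) /\ g x0 - th * l * tau < g (x0 - tau).
Proof.
  intros Hd Hl Hth. set (eta := l * (1 - / th) / 2).
  assert (Hinv : / th < 1) by (rewrite <- Rinv_1; apply Rinv_lt_contravar; lra).
  assert (Hinv0 : 0 < / th) by (apply Rinv_0_lt_compat; lra).
  assert (Heta : 0 < eta) by (unfold eta; apply Rmult_lt_0_compat; [apply Rmult_lt_0_compat|]; lra).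
  destruct (Hd eta Heta) as [delta Hdelta]. exists delta; split; [apply cond_pos|].
  intros tau [Htau Htau'].
  assert (Hquot : forall h, h <> 0 -> Rabs h < delta ->
            Rabs ((g (x0 + h) - g x0) / h - l) < eta) by (intros; now apply Hdelta).
  assert (Hr := Hquot tau ltac:(lra) ltac:(rewrite Rabs_pos_eq; lra)).
  assert (Hle := Hquot (- tau) ltac:(lra) ltac:(rewrite Rabs_Ropp, Rabs_pos_eq; lra)).
  apply Rabs_def2 in Hr; apply Rabs_def2 in Hle. replace (x0 + - tau) with (x0 - tau) in Hle by ring.
  set (qr := (g (x0 + tau) - g x0) / tau) in Hr.
  set (ql := (g (x0 - tau) - g x0) / - tau) in Hle.
  assert (Er : g (x0 + tau) = g x0 + qr * tau) by (unfold qr; field; lra).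
  assert (El : g (x0 - tau) = g x0 - ql * tau) by (unfold ql; field; lra).
  assert (Hlu : l * / th < l) by nra.
  assert (Hgap : 1 - / th < th - 1).
  { replace (1 - / th) with ((th - 1) * / th) by (field; lra). nra. }
  assert (Hlt : l * (1 - / th) < l * (th - 1)) by nra.
  rewrite Er, El. unfold eta in *. split.
  - assert (l * / th < qr) by lra. unfold Rdiv; nra.
  - assert (ql < th * l) by lra. nra.
Qed.

Definition indicator (p : Prop) : R := if excluded_middle_informative p then 1 else 0.

Lemma indicator_T (p : Prop) : p -> indicator p = 1.
Proof. unfold indicator; destruct (excluded_middle_informative p); tauto. Qed.
Lemma indicator_F (p : Prop) : ~ p -> indicator p = 0.
Proof. unfold indicator; destruct (excluded_middle_informative p); tauto. Qed.
Lemma indicator_01 (p : Prop) : 0 <= indicator p <= 1.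
Proof. unfold indicator; destruct (excluded_middle_informative p); lra. Qed.

Lemma balance_saturates N (b : nat -> Prop) (Q : nat -> nat -> R) (u v : nat -> R) :
  (forall i k, (i < N)%nat -> (k < N)%nat -> 0 <= Q i k) ->
  (forall i, (i < N)%nat -> 0 <= u i <= v i) ->
  (forall i, (i < N)%nat -> b i -> 0 < u i) ->
  (forall i, (i < N)%nat -> Rsum N (fun k => indicator (b k) * Q i k) <= indicator (b i)) ->
  (forall k, (k < N)%nat -> b k -> v k <= Rsum N (fun i => Q i k * u i)) ->
  forall i, (i < N)%nat -> b i -> 1 <= Rsum N (fun k => indicator (b k) * Q i k).
Proof.
  intros HQ Huv Hu Hout Hcover. set (X := fun i => Rsum N (fun k => indicator (b k) * Q i k)).
  assert (HX0 : forall i, (i < N)%nat -> 0 <= X i).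
  { intros i hi; apply Rsum_nonneg; intros k hk; pose proof (indicator_01 (b k)); pose proof (HQ i k hi hk); nra. }
  assert (Hin : Rsum N (fun k => indicator (b k) * v k) <= Rsum N (fun i => u i * X i)).
  { apply Rle_trans with (Rsum N (fun k => Rsum N (fun i => indicator (b k) * Q i k * u i))).
    - apply Rsum_le; intros k hk. destruct (classic (b k)) as [Hb|Hb].
      + rewrite (indicator_T _ Hb), Rmult_1_l. eapply Rle_trans; [now apply Hcover|].
        apply Rsum_le; intros i hi; lra.
      + rewrite (indicator_F _ Hb), Rmult_0_l. apply Rsum_nonneg; intros i hi; lra.
    - rewrite Rsum_swap; apply Rsum_le; intros i hi. unfold X; rewrite <- Rsum_scal.
      apply Rsum_le; intros k hk; lra. }
  assert (Hmono : Rsum N (fun i => indicator (b i) * u i) <= Rsum N (fun k => indicator (b k) * v k)).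
  { apply Rsum_le; intros i hi; pose proof (indicator_01 (b i)); pose proof (Huv i hi); nra. }
  intros i hi Hbi. apply Rnot_lt_le; intros HXi. change (X i < 1) in HXi.
  assert (Rsum N (fun i => u i * X i) + u i * (1 - X i) <= Rsum N (fun i => indicator (b i) * u i)).
  { apply Rsum_gap with i; auto; [|rewrite indicator_T by auto; lra].
    intros j hj; cbv beta. specialize (Hout j hj). pose proof (Huv j hj). pose proof (HX0 j hj).
    change (X j <= indicator (b j)) in Hout. nra. }
  assert (0 < u i * (1 - X i)) by (apply Rmult_lt_0_compat; auto; lra).
  lra.
Qed.

Lemma row_saturated N (p : nat -> R) (b t : nat -> Prop) :
  (forall k, (k < N)%nat -> 0 <= p k) -> Rsum N p = 1 ->
  1 <= Rsum N (fun k => indicator (b k) * (indicator (t k) * p k)) ->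
  forall k, (k < N)%nat -> 0 < p k -> b k /\ t k.
Proof.
  intros Hp Hsum Hsat k hk Hpk. apply NNPP; intros Hn.
  assert (Rsum N (fun k => indicator (b k) * (indicator (t k) * p k)) + p k <= Rsum N p); [|lra].
  apply Rsum_gap with k; auto.
  - intros j hj; pose proof (indicator_01 (b j)); pose proof (indicator_01 (t j)); pose proof (Hp j hj).
    apply Rle_trans with (1 * (1 * p j)); [|lra].
    apply Rmult_le_compat; try nra; apply Rmult_le_compat_r; lra.
  - destruct (classic (b k)) as [Hb|Hb]; [rewrite (indicator_F (t k)) by tauto|rewrite (indicator_F (b k)) by auto]; lra.
Qed.

(** * Tight cycles are attracting *)

Section NoRepellingCycle.
Variables (N : nat) (A : nat -> nat -> nat) (P : nat -> nat -> R).
Variables (f : nat -> R -> R) (mu : nat -> (R -> Prop) -> R).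
Hypothesis HS : standing N A P f mu.
Variables a d : nat -> R.
Hypothesis Ha : forall k, (k < N)%nat -> lower_end mu a k.
Hypothesis Hder : forall k, (k < N)%nat ->
  derivable_pt_lim (f k) (a k) (d k) /\ inI (a k) /\ 0 < d k.

Let T := tight N P f a.

Lemma mu_nonneg i J : (i < N)%nat -> borel J -> 0 <= mu i J.
Proof. intros hi HJ; apply meas_nonneg; auto; now apply (mu_measure _ _ _ _ _ HS). Qed.

Lemma inflow_below_image i k r : (i < N)%nat -> r <= f i (a i) ->
  inflow P f mu i k (fun y => y < r) = 0.
Proof.
  intros hi Hr. unfold inflow. destruct (Ha i hi) as [_ [_ [_ [_ Hnull]]]].
  rewrite (meas_null_sub (mu i) (mu_measure _ _ _ _ _ HS i hi) _ (fun x => x < a i)); [ring|..].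
  - apply (good_map_preimage_borel (f i) (fun y => y < r)); [apply HS; auto|apply interval_lt].
  - apply borel_lt.
  - exact Hnull.
  - intros x [hx hfx]; apply Rnot_le_lt; intros Hax.
    assert (f i (a i) <= f i x) by (apply good_map_mono; [apply HS|apply Hder|..]; auto). lra.
Qed.

(* Along a tight edge, what lands just above [a k] comes from just above [a i]:
   by the derivative bound, a window of width [r] pulls back into one of width
   [r * th / d i]. *)
Lemma inflow_tight_edge i k th : T i k -> 1 < th ->
  exists r0, 0 < r0 /\ forall r, 0 < r < r0 ->
    mu i (fun x => inI x /\ f i x < a k + r) <= mu i (fun x => x < a i + r * th / d i).
Proof.
  intros [hi [hk [_ Htight]]] Hth. destruct (Hder i hi) as [Hdi [HaI Hdpos]].
  destruct (slope_bounds (f i) (a i) (d i) th Hdi Hdpos Hth) as [delta [Hdelta Hslope]].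
  exists (delta * d i / th); split; [apply Rdiv_lt_0_compat; nra|]. intros r [Hr Hr'].
  set (tau := r * th / d i).
  assert (Htau : 0 < tau < delta).
  { unfold tau; split; [apply Rdiv_lt_0_compat; nra|].
    apply (Rmult_lt_reg_r (d i / th)); [apply Rdiv_lt_0_compat; lra|].
    replace (r * th / d i * (d i / th)) with r by (field; lra).
    replace (delta * (d i / th)) with (delta * d i / th) by (field; lra); lra. }
  destruct (Hslope tau Htau) as [Hright _].
  replace (d i * tau / th) with r in Hright by (unfold tau; field; lra).
  apply meas_mono; [now apply (mu_measure _ _ _ _ _ HS)| |apply borel_lt|].
  { apply (good_map_preimage_borel (f i) (fun y => y < a k + r)); [apply HS; auto|apply interval_lt]. }
  intros x [hx hfx]. apply Rnot_le_lt; intros Hge.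
  assert (f i (a i + tau) <= f i x) by (apply good_map_mono; [apply HS|..]; auto; unfold inI in *; lra).
  lra.
Qed.

Lemma ray_inflow_edge i k th si sk : (i < N)%nat -> (k < N)%nat -> 1 < th -> 0 < si -> 0 < sk ->
  (T i k -> sk * th * th <= d i * si) ->
  exists e0, 0 < e0 /\ forall e, 0 < e -> e < e0 ->
    inflow P f mu i k (fun y => y < a k + e * sk) <=
    indicator (T i k) * P i k * mu i (fun x => x < a i + e / th * si).
Proof.
  intros hi hk Hth Hsi Hsk Hscale. pose proof (P_nonneg _ _ _ _ _ HS i k hi hk) as HPik.
  assert (Hrhs : forall e, 0 <= indicator (T i k) * P i k * mu i (fun x => x < a i + e / th * si)).
  { intros e; pose proof (indicator_01 (T i k)).
    pose proof (mu_nonneg i (fun x => x < a i + e / th * si) hi (borel_lt _)).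
    apply Rmult_le_pos; [apply Rmult_le_pos|]; lra. }
  destruct (classic (admissible P i k)) as [Hadm|Hnadm].
  2:{
      exists 1; split; [lra|]; intros e _ _. unfold inflow.
      replace (P i k) with 0 by (unfold admissible in Hnadm; lra).
      specialize (Hrhs e); lra. }
  destruct (Req_dec (f i (a i)) (a k)) as [Htight|Hloose].
  -
    assert (HT : T i k) by (repeat split; auto).
    destruct (inflow_tight_edge i k th HT Hth) as [r0 [Hr0 Hincl]].
    exists (r0 / sk); split; [apply Rdiv_lt_0_compat; lra|]. intros e He He'.
    rewrite (indicator_T _ HT), Rmult_1_l. unfold inflow. apply Rmult_le_compat_l; auto.
    assert (Hes : e * sk < r0).
    { apply (Rmult_lt_compat_r sk) in He'; auto. now replace (r0 / sk * sk) with r0 in He' by (field; lra). }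
    eapply Rle_trans; [apply Hincl; split; [nra|auto]|].
    destruct (Hder i hi) as [_ [_ Hdi]]. specialize (Hscale HT).
    apply meas_mono; [now apply (mu_measure _ _ _ _ _ HS)|apply borel_lt|apply borel_lt|].
    intros x Hx. assert (e * sk * th / d i <= e / th * si); [|lra].
    apply (Rmult_le_reg_r (th * d i)); [nra|].
    replace (e * sk * th / d i * (th * d i)) with (e * (sk * th * th)) by (field; lra).
    replace (e / th * si * (th * d i)) with (e * (d i * si)) by (field; lra).
    apply Rmult_le_compat_l; lra.
  - (* strictly admissible edge: [f i (a i) > a k] and nothing lands just above [a k] *)
    pose proof (lower_end_admissible _ _ _ _ _ HS a i k Ha hi hk Hadm) as Hge.
    exists ((f i (a i) - a k) / sk); split; [apply Rdiv_lt_0_compat; lra|]. intros e He He'.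
    rewrite inflow_below_image; [apply Hrhs|auto|].
    apply (Rmult_lt_compat_r sk) in He'; auto.
    replace ((f i (a i) - a k) / sk * sk) with (f i (a i) - a k) in He' by (field; lra). lra.
Qed.

Lemma ray_inflow_bound (B : nat -> Prop) (s : nat -> R) th : 1 < th ->
  (forall k, (k < N)%nat -> 0 < s k) ->
  (forall i k, T i k -> B k -> s k * th * th <= d i * s i) ->
  exists e0, 0 < e0 /\ forall e, 0 < e -> e < e0 -> forall k, (k < N)%nat ->
    forall i, (i < N)%nat -> B k ->
      inflow P f mu i k (fun y => y < a k + e * s k) <=
      indicator (T i k) * P i k * mu i (fun x => x < a i + e / th * s i).
Proof.
  intros Hth Hs Hsk.
  apply (eventually_small_all N (fun k e => forall i, (i < N)%nat -> B k -> _)); intros k hk.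
  apply (eventually_small_all N (fun i e => B k -> inflow P f mu i k (fun y => y < a k + e * s k) <=
      indicator (T i k) * P i k * mu i (fun x => x < a i + e / th * s i))); intros i hi.
  destruct (classic (B k)) as [HBk|HBk]; [|exists 1; split; [lra|tauto]].
  destruct (ray_inflow_edge i k th (s i) (s k) hi hk Hth (Hs i hi) (Hs k hk)) as [e0 [He0 Hedge]].
  { intros HT; now apply Hsk. }
  exists e0; split; auto.
Qed.

(* Under the hypotheses of [ray_inflow_bound], if [B] is closed under tight predecessors,
   then mass balance forces every admissible transition out of [B] to be tight and to
   stay in [B]. *)
Lemma tight_closure (B : nat -> Prop) (s : nat -> R) th : 1 < th ->
  (forall k, (k < N)%nat -> 0 < s k) ->
  (forall i k, T i k -> B k -> s k * th * th <= d i * s i) ->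
  (forall i k, T i k -> B k -> B i) ->
  forall i k, (i < N)%nat -> (k < N)%nat -> B i -> admissible P i k -> B k /\ T i k.
Proof.
  intros Hth Hs Hsk Hpred.
  destruct (ray_inflow_bound B s th Hth Hs Hsk) as [e0 [He0 Hkey]].
  set (e := e0 / 2). set (e' := e / th).
  assert (He : 0 < e) by (unfold e; lra).
  assert (He' : 0 < e' < e).
  { unfold e'; split; [apply Rdiv_lt_0_compat; lra|].
    apply (Rmult_lt_reg_r th); [lra|]. replace (e / th * th) with e by (field; lra). nra. }
  set (u := fun i => mu i (fun x => x < a i + e' * s i)).
  set (v := fun k => mu k (fun x => x < a k + e * s k)).
  set (Q := fun i k => indicator (T i k) * P i k).
  assert (HP := P_nonneg _ _ _ _ _ HS).
  assert (HQ : forall i k, (i < N)%nat -> (k < N)%nat -> 0 <= Q i k)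
    by (intros i k hi hk; pose proof (indicator_01 (T i k)); pose proof (HP i k hi hk); unfold Q; nra).
  assert (Hrow : forall i, (i < N)%nat -> Rsum N (fun k => P i k) = 1) by apply HS.
  assert (Hsat : forall i, (i < N)%nat -> B i -> 1 <= Rsum N (fun k => indicator (B k) * Q i k)).
  { apply (balance_saturates N B Q u v HQ).
    - intros i hi; split; [apply mu_nonneg; auto; apply borel_lt|].
      apply meas_mono; [now apply (mu_measure _ _ _ _ _ HS)|apply borel_lt|apply borel_lt|].
      intros x Hx; pose proof (Hs i hi); nra.
    - intros i hi _. destruct (Ha i hi) as [_ [_ [Hsupp _]]].
      eapply Rlt_le_trans; [apply (Hsupp (e' * s i)); pose proof (Hs i hi); nra|].
      apply meas_mono; [now apply (mu_measure _ _ _ _ _ HS)|apply borel_open|apply borel_lt|intros; lra].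
    - intros i hi. destruct (classic (B i)) as [HBi|HBi].
      + rewrite (indicator_T _ HBi), <- (Hrow i hi). apply Rsum_le; intros k hk.
        pose proof (indicator_01 (B k)); pose proof (indicator_01 (T i k)); pose proof (HP i k hi hk).
        unfold Q; apply Rle_trans with (1 * (1 * P i k)); [|lra].
        apply Rmult_le_compat; try nra; apply Rmult_le_compat_r; lra.
      + rewrite (indicator_F _ HBi), <- (Rsum_zero N). apply Rsum_le; intros k hk.
        destruct (classic (B k)) as [HBk|HBk]; [|rewrite (indicator_F _ HBk); lra].
        unfold Q; rewrite (indicator_F (T i k)); [lra|intros HT; apply HBi; eauto].
    - intros k hk HBk. unfold v; rewrite (stationary_interval _ _ _ _ _ HS) by (auto; apply borel_lt).
      apply Rsum_le; intros i hi. unfold Q, u, e'. apply Hkey; auto. unfold e; lra. }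
  intros i k hi hk HBi Hadm.
  apply (row_saturated N (P i) B (T i)); auto; exact (Hsat i hi HBi).
Qed.

(* If some tight cycle were repelling, the set [B] of states from which a tight walk
   reaches it would (by (G1), (G2) and [expanding_potential]) satisfy the hypotheses
   of [tight_closure]; by irreducibility [B] would contain every state and all
   admissible transitions would be tight, i.e. [a] would violate (G3). *)
Lemma tight_cycles_attracting C : simple_cycle T C -> weight d C < 1.
Proof.
  intros HC. pose proof (st_G1 _ _ _ _ _ HS) as HG1.
  destruct (Rtotal_order (weight d C) 1) as [Hlt|[Heq|Hgt]]; auto;
    [exfalso; exact (tight_cycle_not_neutral N P f a d Hder C HG1 HC Heq)|exfalso].
  set (B := fun k => (k < N)%nat /\ exists p, walk T (k :: p) /\ In (last (k :: p) 0%nat) C).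
  assert (Hpred : forall i k, T i k -> B k -> B i).
  { intros i k HT [hk [p [Hp1 Hp2]]]; split; [apply HT|exists (k :: p); split; [split|]; auto]. }
  set (E := fun i j => T i j /\ B j).
  assert (HE : forall i j, E i j -> (i < N)%nat /\ (j < N)%nat) by (intros i j [HT _]; apply (tight_bound N P f a _ _ HT)).
  assert (Hexp : forall l, simple_cycle E l -> 1 < weight d l).
  { intros l Hl. assert (HlT : simple_cycle T l) by (eapply simple_cycle_mono; [|exact Hl]; intros i j []; auto).
    assert (Hne1 := tight_cycle_not_neutral N P f a d Hder l HG1 HlT).
    destruct (Rtotal_order (weight d l) 1) as [Hl1|[|]]; [exfalso|congruence|auto].
    destruct l as [|u l']; [destruct Hl; congruence|].
    pose proof Hl as [_ [_ Hw]].
    destruct (walk_source E (u :: l') _ u Hw (or_introl eq_refl)) as [y [HTuy HBy]].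
    destruct (Hpred u y HTuy HBy) as [_ [p [Hp1 Hp2]]].
    apply (no_tight_walk_attracting_to_repelling N P f a d Hder (u :: l') C u p (st_G2 _ _ _ _ _ HS));
      auto; left; auto. }
  destruct (expanding_potential N E d HE) as [t [s [Ht [Hs Hst]]]]; [intros; now apply Hder|auto|].
  set (th := sqrt t).
  assert (Hth : th * th = t) by (apply sqrt_sqrt; lra).
  assert (Hth1 : 1 < th) by (assert (0 <= th) by apply sqrt_pos; nra).
  assert (Hclosed := tight_closure B s th Hth1 Hs
                       ltac:(intros i k HT HBk; rewrite Rmult_assoc, Hth; now apply Hst) Hpred).
  destruct C as [|u C']; [destruct HC; congruence|].
  assert (Hu : (u < N)%nat) by (apply (tight_cycle_bound N P f a _ HC); left; auto).
  assert (HBall : forall k, (k < N)%nat -> B k).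
  { intros k hk. apply (irreducible_forward N A P B (st_zero_one _ _ _ _ _ HS) (st_primitive _ _ _ _ _ HS)
                          (st_compatible _ _ _ _ _ HS)) with u; auto.
    - intros l j hl hj Hadm HBl; now apply (Hclosed l j).
    - split; auto; exists []; split; simpl; auto. }
  apply (st_G3 _ _ _ _ _ HS). exists a; split; [intros i hi; apply Hder; auto|].
  intros i j hi hj Hadm. apply (Hclosed i j hi hj (HBall i hi) Hadm).
Qed.

End NoRepellingCycle.

(** * Trapping from below *)

Section LowerTrapping.
Variables (N : nat) (A : nat -> nat -> nat) (P : nat -> nat -> R).
Variables (f : nat -> R -> R) (mu : nat -> (R -> Prop) -> R).
Hypothesis HS : standing N A P f mu.

(* On a
   tight edge this needs [t * d k * phi k <= phi m]; otherwise there is a gap. *)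
Lemma lower_step a d phi t k m : (forall k, (k < N)%nat -> lower_end mu a k) ->
  derivable_pt_lim (f k) (a k) (d k) -> 0 < d k -> 1 < t -> 0 < phi k -> 0 < phi m ->
  (tight N P f a k m -> t * d k * phi k <= phi m) ->
  (k < N)%nat -> (m < N)%nat -> admissible P k m ->
  exists s0, 0 < s0 /\ forall s, 0 < s -> s < s0 -> a m - s * phi m < f k (a k - s * phi k).
Proof.
  intros Ha Hdk Hdpos Ht Hphik Hphim Hpot hk hm Hadm.
  destruct (Req_dec (f k (a k)) (a m)) as [Htight|Hloose].
  - destruct (slope_bounds (f k) (a k) (d k) t Hdk Hdpos Ht) as [delta [Hdelta Hslope]].
    specialize (Hpot ltac:(repeat split; auto)).
    exists (delta / phi k); split; [apply Rdiv_lt_0_compat; lra|]. intros s Hs Hs'.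
    assert (Htau : 0 < s * phi k < delta).
    { split; [nra|]. apply (Rmult_lt_compat_r (phi k)) in Hs'; auto.
      now replace (delta / phi k * phi k) with delta in Hs' by (field; lra). }
    destruct (Hslope _ Htau) as [_ Hleft]. nra.
  - pose proof (lower_end_admissible _ _ _ _ _ HS a k m Ha hk hm Hadm) as Hge.
    destruct (deriv_continuous (f k) (a k) (d k) Hdk (f k (a k) - a m)) as [delta [Hdelta Hcont]]; [lra|].
    exists (delta / phi k); split; [apply Rdiv_lt_0_compat; lra|]. intros s Hs Hs'.
    assert (s * phi k < delta).
    { apply (Rmult_lt_compat_r (phi k)) in Hs'; auto.
      now replace (delta / phi k * phi k) with delta in Hs' by (field; lra). }
    specialize (Hcont (a k - s * phi k)). rewrite Rabs_left1 in Hcont by nra.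
    specialize (Hcont ltac:(lra)). apply Rabs_def2 in Hcont. nra.
Qed.

(* Since all tight cycles contract, a contracting potential on the tight graph gives
   scales [phi k] for which every admissible step satisfies [lower_step]. *)
Lemma lower_scales : exists a phi, (forall k, (k < N)%nat -> lower_end mu a k) /\
  (forall k, (k < N)%nat -> 0 < phi k) /\
  forall k m, (k < N)%nat -> (m < N)%nat -> admissible P k m ->
    exists s0, 0 < s0 /\ forall s, 0 < s -> s < s0 -> a m - s * phi m < f k (a k - s * phi k).
Proof.
  destruct (lower_ends_exist _ _ _ _ _ HS) as [a Ha].
  destruct (finite_choice 0 N (fun k l => derivable_pt_lim (f k) (a k) l /\ 0 < l)) as [d Hd].
  { intros k hk. destruct (Ha k hk) as [H0 [H1 _]]. apply good_map_deriv_pos; [apply HS|]; auto. }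
  assert (Hder : forall k, (k < N)%nat -> derivable_pt_lim (f k) (a k) (d k) /\ inI (a k) /\ 0 < d k).
  { intros k hk. destruct (Hd k hk) as [Hdk Hdpos], (Ha k hk) as [H0 [H1 _]].
    repeat split; auto; lra. }
  destruct (contracting_potential N (tight N P f a) (tight_bound N P f a) d) as [t [phi [Ht [Hphi1 Hphi2]]]].
  { intros k hk; apply Hd; auto. }
  { apply (tight_cycles_attracting _ _ _ _ _ HS a d Ha Hder). }
  exists a, phi; split; auto; split; [intros k hk; specialize (Hphi1 k hk); lra|].
  intros k m hk hm Hadm. pose proof (Hphi1 k hk); pose proof (Hphi1 m hm).
  apply (lower_step a d phi t k m Ha); try apply Hd; auto; lra.
Qed.

Lemma lower_margins : exists a, (forall k, (k < N)%nat -> lower_end mu a k) /\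
  forall eps, 0 < eps -> exists delta : nat -> R,
    (forall k, (k < N)%nat -> 0 < delta k /\ delta k < eps /\ delta k < a k) /\
    forall k m x, (k < N)%nat -> (m < N)%nat -> admissible P k m -> inI x ->
      a k - delta k <= x -> a m - delta m < f k x.
Proof.
  destruct lower_scales as [a [phi [Ha [Hphi Hstep]]]]. exists a; split; auto.
  intros eps Heps.
  destruct (eventually_small_all N (fun k s => s * phi k < Rmin eps (a k))) as [s1 [Hs1 Hsize]].
  { intros k hk. pose proof (Hphi k hk). destruct (Ha k hk) as [Hak _].
    exists (Rmin eps (a k) / phi k); split; [apply Rdiv_lt_0_compat; [apply Rmin_pos|]; lra|].
    intros s Hs Hs'. apply (Rmult_lt_compat_r (phi k)) in Hs'; auto.
    now replace (Rmin eps (a k) / phi k * phi k) with (Rmin eps (a k)) in Hs' by (field; lra). }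
  destruct (eventually_small_all N (fun k s => forall m, (m < N)%nat -> admissible P k m ->
      a m - s * phi m < f k (a k - s * phi k))) as [s2 [Hs2 Hsteps]].
  { intros k hk. apply (eventually_small_all N); intros m hm.
    destruct (classic (admissible P k m)) as [Hadm|Hnadm]; [|exists 1; split; [lra|tauto]].
    destruct (Hstep k m hk hm Hadm) as [s0 [Hs0 H]]; exists s0; auto. }
  set (s := Rmin s1 s2 / 2).
  assert (Hs : 0 < s < s1 /\ s < s2)
    by (pose proof (Rmin_l s1 s2); pose proof (Rmin_r s1 s2); pose proof (Rmin_pos s1 s2 Hs1 Hs2); unfold s; lra).
  exists (fun k => s * phi k); split.
  - intros k hk. specialize (Hsize s ltac:(lra) ltac:(lra) k hk). pose proof (Hphi k hk).
    pose proof (Rmin_l eps (a k)); pose proof (Rmin_r eps (a k)). repeat split; nra.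
  - intros k m x hk hm Hadm Hx Hxk. specialize (Hsteps s ltac:(lra) ltac:(lra) k hk m hm Hadm).
    specialize (Hsize s ltac:(lra) ltac:(lra) k hk). pose proof (Rmin_r eps (a k)).
    assert (f k (a k - s * phi k) <= f k x); [|lra].
    apply good_map_mono; [apply HS; auto|unfold inI in *; split; lra|auto|auto].
Qed.

End LowerTrapping.

(** * The reflection [x |-> 1 - x] *)

(* Conjugating by [x |-> 1 - x] exchanges lower and upper ends of supports, so the
   upper half of the theorem is the lower half for the reflected system. *)
Definition reflect_maps (f : nat -> R -> R) : nat -> R -> R := fun k x => 1 - f k (1 - x).
Definition reflect_measure (mu : nat -> (R -> Prop) -> R) : nat -> (R -> Prop) -> R :=
  fun k S => mu k (fun x => S (1 - x)).

Lemma inI_reflect x : inI (1 - x) <-> inI x.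
Proof. unfold inI; split; intros; lra. Qed.

Lemma reflect_deriv g x l : derivable_pt_lim g (1 - x) l -> derivable_pt_lim (fun y => 1 - g (1 - y)) x l.
Proof.
  intros H eps Heps. destruct (H eps Heps) as [delta Hdelta]. exists delta; intros h Hh Hsmall.
  specialize (Hdelta (- h) ltac:(lra)). rewrite Rabs_Ropp in Hdelta. specialize (Hdelta Hsmall).
  replace (1 - (x + h)) with (1 - x + - h) by ring.
  replace ((1 - g (1 - x + - h) - (1 - g (1 - x))) / h) with ((g (1 - x + - h) - g (1 - x)) / - h)
    by (field; lra). auto.
Qed.

Lemma reflect_deriv_back g x l : derivable_pt_lim (fun y => 1 - g (1 - y)) x l ->
  derivable_pt_lim g (1 - x) l.
Proof.
  intros H.
  assert (Hg : g = fun y => 1 - (fun z => 1 - g (1 - z)) (1 - y)).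
  { apply functional_extensionality; intros y; replace (1 - (1 - y)) with y by ring; ring. }
  rewrite Hg at 1. apply (reflect_deriv (fun z => 1 - g (1 - z))).
  now replace (1 - (1 - x)) with x by ring.
Qed.

Lemma good_map_reflect g : good_map g -> good_map (fun x => 1 - g (1 - x)).
Proof.
  intros [Hrange [Hinc [dg [Hd [Hcont Hnz]]]]]. split; [|split].
  - intros x hx. apply inI_reflect in hx. specialize (Hrange _ hx); lra.
  - intros x y hx hy Hxy. apply inI_reflect in hx; apply inI_reflect in hy.
    assert (g (1 - y) < g (1 - x)) by (apply Hinc; auto; lra). lra.
  - exists (fun x => dg (1 - x)); split; [|split].
    + intros x hx; apply reflect_deriv, Hd, inI_reflect; auto.
    + intros x hx eps Heps. destruct (Hcont (1 - x) (proj2 (inI_reflect x) hx) eps Heps) as [delta [Hdelta H]].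
      exists delta; split; auto; intros y hy Hyx. apply H; [now apply inI_reflect|].
      now replace (1 - y - (1 - x)) with (- (y - x)) by ring; rewrite Rabs_Ropp.
    + intros x hx; apply Hnz, inI_reflect; auto.
Qed.

Lemma comp_reflect f w : Defs.comp (reflect_maps f) w = fun x => 1 - Defs.comp f w (1 - x).
Proof.
  apply functional_extensionality. induction w as [|k w IH]; intros x; simpl; [ring|].
  destruct w as [|y w]; [ring|]. rewrite IH. unfold reflect_maps.
  now replace (1 - (1 - f k (1 - x))) with (f k (1 - x)) by ring.
Qed.

Lemma fixed_pt_reflect g q : fixed_pt (fun x => 1 - g (1 - x)) q -> fixed_pt g (1 - q).
Proof. intros [hq Hfix]; split; [apply inI_reflect; replace (1 - (1 - q)) with q by ring; auto|cbv beta in Hfix; lra]. Qed.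

Lemma attracting_reflect g q : attracting_fixed_pt (fun x => 1 - g (1 - x)) q ->
  attracting_fixed_pt g (1 - q).
Proof. intros [Hfix [l [Hd Hl]]]; split; [now apply fixed_pt_reflect|exists l; split; auto; now apply reflect_deriv_back]. Qed.

Lemma repelling_reflect g q : repelling_fixed_pt (fun x => 1 - g (1 - x)) q ->
  repelling_fixed_pt g (1 - q).
Proof. intros [Hfix [l [Hd Hl]]]; split; [now apply fixed_pt_reflect|exists l; split; auto; now apply reflect_deriv_back]. Qed.

Lemma borel_reflect S : borel S -> borel (fun x => S (1 - x)).
Proof.
  intros H SS [HT [HC HU]] Hopen. apply (H (fun B => SS (fun x => B (1 - x)))).
  - split; [exact HT|split; [intros B HB; now apply HC|]].
    intros Bn HB; apply (HU (fun n x => Bn n (1 - x))); auto.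
  - intros a b. replace (fun x => a < 1 - x < b) with (fun x => 1 - b < x < 1 - a); auto.
    apply set_ext; intros; lra.
Qed.

Lemma finite_measure_reflect m : finite_measure m -> finite_measure (fun S => m (fun x => S (1 - x))).
Proof.
  intros [H0 [Hnn Hadd]]. split; [exact H0|split; [intros S HS; apply Hnn, borel_reflect; auto|]].
  intros An HB Hdisj. apply (Hadd (fun n x => An n (1 - x))); [intros; apply borel_reflect; auto|].
  intros n k x; apply Hdisj.
Qed.

Lemma supp_reflect m x : supp (fun S => m (fun y => S (1 - y))) x <-> supp m (1 - x).
Proof.
  unfold supp. assert (E : forall d, (fun y => (fun z => x - d < z < x + d) (1 - y)) =
                                     (fun y => 1 - x - d < y < 1 - x + d))
    by (intros d; apply set_ext; intros y; cbv beta; lra).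
  split; intros H d Hd; specialize (H d Hd); [rewrite E in H|rewrite E]; auto.
Qed.

(* The standing assumptions are invariant under reflection; (G2) swaps the roles of
   attracting and repelling in both clauses at once. *)
Lemma standing_reflect N A P f mu : standing N A P f mu ->
  standing N A P (reflect_maps f) (reflect_measure mu).
Proof.
  intros HS. destruct HS as [H01 Hprim HP Hc Hf HG1 HG2 HG3 [[Hmeas Hsum] Hstat]].
  constructor; auto.
  - intros k hk; apply good_map_reflect; auto.
  - intros w q l Hw Hfix Hd. rewrite comp_reflect in Hfix, Hd.
    apply (HG1 w (1 - q) l Hw); [now apply fixed_pt_reflect|now apply reflect_deriv_back].
  - intros w u v q Hw Hu Hv E1 E2. rewrite !comp_reflect.
    destruct (HG2 w u v (1 - q) Hw Hu Hv E1 E2) as [C1 C2].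
    split; intros H1 H2; [apply attracting_reflect in H1; apply repelling_reflect in H2
                         |apply repelling_reflect in H1; apply attracting_reflect in H2];
      cbv beta in H2; replace (1 - (1 - Defs.comp f w (1 - q))) with (Defs.comp f w (1 - q)) in H2 by ring;
      [exact (C1 H1 H2)|exact (C2 H1 H2)].
  - intros [b [Hb1 Hb2]]. apply HG3. exists (fun i => 1 - b i); split.
    + intros i hi; apply inI_reflect; replace (1 - (1 - b i)) with (b i) by ring; auto.
    + intros i j hi hj Hadm. specialize (Hb2 i j hi hj Hadm). unfold reflect_maps in Hb2; lra.
  - split; [split; auto|].
    + intros k hk. destruct (Hmeas k hk) as [Hm Hout]. split; [now apply finite_measure_reflect|].
      unfold reflect_measure. rewrite <- Hout. f_equal. apply set_ext; intros x. rewrite inI_reflect; tauto.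
    + intros j S hj HSb. unfold reflect_measure. rewrite Hstat; auto; [|now apply borel_reflect].
      apply Rsum_ext; intros i hi. do 2 f_equal. apply set_ext; intros x. rewrite inI_reflect.
      unfold reflect_maps. now replace (1 - (1 - x)) with x by ring.
Qed.

Lemma reflected_lower_end mu a' k : lower_end (reflect_measure mu) a' k ->
  0 < 1 - a' k < 1 /\ supp (mu k) (1 - a' k) /\ forall x, supp (mu k) x -> x <= 1 - a' k.
Proof.
  intros [H0 [H1 [Hsupp [Hmin _]]]]. split; [lra|split; [now apply supp_reflect|]].
  intros x Hx. assert (a' k <= 1 - x); [|lra].
  apply Hmin, supp_reflect; now replace (1 - (1 - x)) with x by ring.
Qed.

Lemma I_mu_char m a b : supp m a -> supp m b -> (forall x, supp m x -> a <= x) ->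
  (forall x, supp m x -> x <= b) -> forall x, I_mu m x <-> a <= x <= b.
Proof.
  intros Ha Hb Hmin Hmax x; split; [intros [a0 [b0 [H1 [H2 H3]]]]|intros Hx; exists a, b; auto].
  specialize (Hmin a0 H1); specialize (Hmax b0 H2); lra.
Qed.

Lemma near_interval eps a b dl du x : a <= b -> 0 <= dl < eps -> 0 <= du < eps ->
  a - dl <= x <= b + du -> U_eps eps (fun y => a <= y <= b) x.
Proof.
  intros Hab Hdl Hdu Hx.
  destruct (Rlt_le_dec x a); [exists a; split; [lra|rewrite Rabs_left1; lra]|].
  destruct (Rle_lt_dec x b); [exists x|exists b]; split; try lra.
  - rewrite Rminus_diag, Rabs_R0; lra.
  - rewrite Rabs_pos_eq; lra.
Qed.

Lemma trapping_boxes N P f (lo hi : nat -> R) :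
  (forall k, (k < N)%nat -> 0 <= lo k <= hi k /\ hi k <= 1) ->
  (forall k m x, (k < N)%nat -> (m < N)%nat -> admissible P k m -> lo k <= x <= hi k ->
     lo m < f k x < hi m) ->
  trapping N P f (fun k x => lo k <= x <= hi k).
Proof.
  intros Hbox Hmap. split.
  - intros k hk. destruct (Hbox k hk) as [H1 H2].
    split; [exists (lo k); lra|split; [intros x y z; lra|unfold inI; intros; lra]].
  - intros k m x hk hm Hadm Hx. destruct (Hmap k m x hk hm Hadm Hx) as [H1 H2].
    split; [lra|]. exists (Rmin (f k x - lo m) (hi m - f k x)); split; [apply Rmin_pos; lra|].
    intros y _ Hy. pose proof (Rmin_l (f k x - lo m) (hi m - f k x)).
    pose proof (Rmin_r (f k x - lo m) (hi m - f k x)). apply Rabs_def2 in Hy; lra.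
Qed.

Theorem mainTheorem3
  (N : nat) (A : nat -> nat -> nat) (P : nat -> nat -> R) (f : nat -> R -> R)
  (mu : nat -> (R -> Prop) -> R)
  (hN : (1 <= N)%nat)
  (hA01 : zero_one_matrix N A) (hAprim : has_positive_power N A)
  (hP : stochastic N P) (hPA : compatible N A P)
  (hf : forall k, (k < N)%nat -> good_map (f k))
  (hG1 : G1 N P f) (hG2 : G2 N P f) (hG3 : G3 N P f)
  (hmu : ergodic N P f mu) :
  forall eps, 0 < eps ->
    exists D : nat -> R -> Prop,
      trapping N P f D /\
      forall k, (k < N)%nat ->
        (forall x, I_mu (mu k) x -> D k x) /\
        (forall x, D k x -> U_eps eps (I_mu (mu k)) x).
Proof.
  intros eps Heps.
  assert (HS : standing N A P f mu) by (constructor; auto; apply hmu).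
  destruct (lower_margins _ _ _ _ _ HS) as [a [Ha Hlow]].
  destruct (lower_margins _ _ _ _ _ (standing_reflect _ _ _ _ _ HS)) as [a' [Ha' Hup]].
  destruct (Hlow eps Heps) as [dl [Hdl Hlow_in]]. destruct (Hup eps Heps) as [du [Hdu Hup_in]].
  set (b := fun k => 1 - a' k).
  assert (Hends : forall k, (k < N)%nat -> a k <= b k /\
            forall x, I_mu (mu k) x <-> a k <= x <= b k).
  { intros k hk. destruct (Ha k hk) as [_ [_ [Hsa [Hmin _]]]].
    destruct (reflected_lower_end mu a' k (Ha' k hk)) as [_ [Hsb Hmax]].
    split; [now apply Hmin|now apply I_mu_char]. }
  exists (fun k x => a k - dl k <= x <= b k + du k); split.
  - apply trapping_boxes.
    + intros k hk. destruct (Hdl k hk), (Hdu k hk), (Hends k hk). unfold b in *; lra.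
    + intros k m x hk hm Hadm Hx. assert (HxI : inI x) by (destruct (Hdl k hk), (Hdu k hk); unfold inI, b in *; lra).
      split; [apply (Hlow_in k m x); auto; lra|].
      assert (Hr : a' m - du m < reflect_maps f k (1 - x)).
      { apply (Hup_in k m (1 - x)); auto; [now apply inI_reflect|unfold b in Hx; lra]. }
      unfold reflect_maps, b in *. replace (1 - (1 - x)) with x in Hr by ring. lra.
  - intros k hk. destruct (Hends k hk) as [Hab Hchar]. destruct (Hdl k hk), (Hdu k hk). split.
    + intros x Hx; apply Hchar in Hx; lra.
    + intros x Hx. destruct (near_interval eps (a k) (b k) (dl k) (du k) x) as [y [Hy Hxy]]; try lra.
      exists y; split; auto; now apply Hchar.
Qed.
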